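(* Let $\gamma\in(0,2)$, let $L$ be a positive measurable function slowly varying at infinity, and set $g(n)=n^{\gamma}L(n)$. Suppose there exist constants $C_1,C_2>0$ such that $G(x)\le C_1x^{2-\gamma}L(1/x)$ for all sufficiently small $x>0$ and $\operatorname{Var}(S_n)\ge C_2\,g(n)$ for all sufficiently large $n$. Then there exists a constant $C_3>0$ such that $G(x)>C_3x^{2-\gamma}L(1/x)$ for all sufficiently small $x>0$.
   Context: Let $X_1,X_2,\ldots$ be a sequence of centred, weakly stationary, real random variables with finite second moments. Its spectral measure is the finite Borel measure $F$ on $[-\pi,\pi]$ such that $\operatorname{Cov}(X_0,X_k)=\int_{-\pi}^{\pi}e^{\mathrm{i}tk}\,F(\mathrm{d}t)$ for all integers $k$; it is assumed that $F$ is symmetric about the origin. Define $G(x)=F([-x,x])$ for $0\le x\le\pi$, and $S_n=X_1+\cdots+X_n$. A positive measurable function $L$ is slowly varying at infinity if $L(\lambda x)/L(x)\to1$ as $x\to\infty$ for every $\lambda>0$. *)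

From Stdlib Require Import Reals Lra ZArith List ClassicalEpsilon.
Open Scope R_scope.

Inductive borel : (R -> Prop) -> Prop :=
| borel_interval (a b : R) : borel (fun x => a < x < b)
| borel_compl (A : R -> Prop) : borel A -> borel (fun x => ~ A x)
| borel_union (A : nat -> R -> Prop) :
    (forall n, borel (A n)) -> borel (fun x => exists n, A n x)
| borel_ext (A B : R -> Prop) : borel A -> (forall x, A x <-> B x) -> borel B.

Definition lebesgue_null (N : R -> Prop) : Prop :=
  forall eps, 0 < eps ->
  exists (a b : nat -> R),
    (forall n, a n <= b n) /\
    (forall m, sum_f_R0 (fun n => b n - a n) m <= eps) /\
    (forall x, N x -> exists n, a n < x < b n).

(* Lebesgue measurable sets = completion of the Borel sigma-algebra. *)
Definition lebesgue_measurable_set (A : R -> Prop) : Prop :=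
  exists B N, borel B /\ lebesgue_null N /\
    (forall x, ~ N x -> (A x <-> B x)).

Definition measurable_on_ray (f : R -> R) (a : R) : Prop :=
  forall c, lebesgue_measurable_set (fun x => a <= x /\ c < f x).

Definition slowly_varying (L : R -> R) : Prop :=
  forall lam, 0 < lam ->
  forall eps, 0 < eps -> exists M, forall x, M <= x ->
    Rabs (L (lam * x) / L x - 1) < eps.

(* D x = F([-pi, x]) : the distribution function of a finite Borel measure F
   supported by [-pi, pi]. *)
Definition spectral_df (D : R -> R) : Prop :=
  (forall x y, x <= y -> D x <= D y) /\
  (forall x eps, 0 < eps -> exists delta, 0 < delta /\
     forall y, x <= y < x + delta -> Rabs (D y - D x) < eps) /\
  (forall x, x < - PI -> D x = 0) /\
  (forall x, PI <= x -> D x = D PI).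

Definition left_lim (D : R -> R) (a l : R) : Prop :=
  forall eps, 0 < eps -> exists delta, 0 < delta /\
    forall y, a - delta < y < a -> Rabs (D y - l) < eps.

Definition left_limit (D : R -> R) (a : R) : R :=
  epsilon (inhabits 0) (fun l => left_lim D a l).

(* F([a,b]) = D(b) - D(a-) *)
Definition Fcc (D : R -> R) (a b : R) : R := D b - left_limit D a.

(* F symmetric about 0:  F([-pi,x]) = F([-x,pi]) for all x. *)
Definition symmetric_df (D : R -> R) : Prop :=
  forall x, left_lim D (- x) (D PI - D x).

Definition G (D : R -> R) (x : R) : R := Fcc D (- x) x.

(* Lebesgue-Stieltjes integral of a continuous f over (a,b] w.r.t. D, as
   the limit of Riemann-Stieltjes sums on uniform partitions. *)
Definition rs_sum (f D : R -> R) (a b : R) (N : nat) : R :=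
  let x := fun i : nat => a + (b - a) * INR i / INR (S N) in
  sum_f_R0 (fun i => f (x (S i)) * (D (x (S i)) - D (x i))) N.

(* integral over [-pi,pi] against F (D vanishes left of -pi) equals l *)
Definition spec_int (f D : R -> R) (l : R) : Prop :=
  Un_cv (rs_sum f D (- PI - 1) PI) l.

(* Cov(X_0,X_k) = \int e^{itk} F(dt), split into real and imaginary parts *)
Definition is_spectral_measure_of (D : R -> R) (r : Z -> R) : Prop :=
  forall k : Z,
    spec_int (fun t => cos (t * IZR k)) D (r k) /\
    spec_int (fun t => sin (t * IZR k)) D 0.

(* Var(S_n) = sum_{j,k=1}^n Cov(X_j,X_k) = sum_{j,k=1}^n r(k-j) *)
Definition varS (r : Z -> R) (n : nat) : R :=
  fold_right Rplus 0
    (map (fun j => fold_right Rplus 0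
       (map (fun k => r (Z.of_nat k - Z.of_nat j)%Z) (seq 1 n))) (seq 1 n)).

From Stdlib Require Import Reals ZArith Lra Lia List ClassicalEpsilon Classical FunctionalExtensionality.
Open Scope R_scope.

(* Write T(n) = n^gamma L(n).  Since Var(S_n) = ∫ K_n dF with the Fejer
   kernel K_n(t) = |sum_{k=1}^n e^{ikt}|^2 <= min(n^2, 36/t^2), a dyadic
   decomposition of [-pi,pi] around a base scale theta gives
     Var(S_n) <= n^2 G(theta) + (annuli where the assumed upper bound on G
                 applies) + (annuli of scale >= d0, each O(F([-pi,pi]))).
   Choosing theta ≍ R0/n with R0 large, the middle term is at most
   C2/4 T(n) (regular variation of T), and the last one is a constant, so
   eventually <= C2/4 T(n).  Together with Var(S_n) >= C2 T(n) this forces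
   n^2 G(theta) >= C2/2 T(n), which transfers to every small x by
   monotonicity of G and slow variation of L.

   The comparisons L(y) ≍ L(lam y), uniformly in lam ∈ [1,2], need the
   measurability of L: they come from a Steinhaus-type argument with the
   Lebesgue measure of MathComp-Analysis (first part of the file). *)

(* The measure-theoretic
   argument below only needs to know that such sets are measurable. *)
Inductive lmeas : (R -> Prop) -> Prop :=
| lmeas_base S : lebesgue_measurable_set S -> lmeas S
| lmeas_oc a b : lmeas (fun x => Rlt a x /\ Rle x b)
| lmeas_compl S : lmeas S -> lmeas (fun x => ~ S x)
| lmeas_inter S T : lmeas S -> lmeas T -> lmeas (fun x => S x /\ T x)
| lmeas_cap (S : nat -> R -> Prop) :
    (forall n, lmeas (S n)) -> lmeas (fun x => forall n, S n x).

(* A Steinhaus-type lemma, proved with the Lebesgue outer measure of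
   MathComp-Analysis: two sequences of measurable subsets of (1,4] that
   eventually contain every point of (1,4] cannot stay disjoint after a
   dilation of the second one by factors in [1,2]. *)
Module Steinhaus.
From mathcomp Require Import all_boot all_order all_algebra.
From mathcomp Require Import all_classical all_reals all_analysis.
From mathcomp Require Import Rstruct Rstruct_topology.
Import Order.TTheory GRing.Theory Num.Theory.
Local Open Scope classical_set_scope.
Local Open Scope ring_scope.

(* Unfold the ring operations of the real numbers to the Stdlib ones, so
   that [lra]/[nra] apply. *)
Ltac to_stdlib := unfold GRing.natmul in *; simpl in *;
  unfold GRing.add, GRing.mul, GRing.opp, GRing.inv, GRing.one, GRing.zero in *;
  simpl in *.

(* Lebesgue outer measure. *)
Local Notation mo := (mu_ext (@wlength R idfun)).
(* The Caratheodory-measurable sets of [mo] (the Lebesgue sigma-algebra). *)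
Local Notation CT := (caratheodory_type mo).

Lemma scale_ocitv (c : R) (F : set (ocitv_type R)) : 0 < c ->
  (@measurable _ (ocitv_type R)) F ->
  (@measurable _ (ocitv_type R)) [set x | F (x * c)] /\
  wlength idfun [set x | F (x * c)] = ((c^-1)%:E * wlength idfun F)%E.
Proof.
move=> c0 /ocitvP[->|[[a b]] /= ab ->].
  have -> : [set x : R | (set0 : set R) (x * c)] = set0 by apply/seteqP; split.
  by rewrite wlength0 mule0; split => //; exact: ocitv0.
have -> : [set x : R | `]a, b]%classic (x * c)] = `]a / c, b / c]%classic.
  apply/seteqP; split => x /=; rewrite !in_itv /=.
  by rewrite (ltr_pdivrMr _ _ c0) (ler_pdivlMr _ _ c0).
  by rewrite (ltr_pdivrMr _ _ c0) (ler_pdivlMr _ _ c0).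
split; first exact: is_ocitv.
rewrite !wlength_itv_bnd /=; [|exact: ltW|].
  by rewrite -EFinM mulrBr !(mulrC c^-1).
by rewrite ler_pM2r ?invr_gt0 // ltW.
Qed.

Lemma mo_scale (c : R) (S : set R) : 0 < c ->
  ((c%:E * mo [set x : R | S (x * c)%R]) <= mo S)%E.
Proof.
move=> c0; rewrite {2}/mu_ext; apply: le_ereal_inf_tmp => _ [F [mF SF] <-].
pose G k := [set x | F k (x * c)].
have mG k : (@measurable _ (ocitv_type R)) (G k) by case: (@scale_ocitv c _ c0 (mF k)).
have wG k : wlength idfun (G k) = ((c^-1)%:E * wlength idfun (F k))%E.
  by case: (@scale_ocitv c _ c0 (mF k)).
have h : (mo [set x : R | S (x * c)%R] <= \sum_(k <oo) wlength idfun (G k))%E.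
  apply: ereal_inf_lbound; exists G => //; split => // x /= Sx.
  by have [k _ Fk] := SF _ Sx; exists k.
move: h; rewrite (eq_eseriesr (fun k _ => wG k)) nneseriesZl; last first.
  by move=> i _; apply: wlength_ge0.
move=> h; rewrite -(@lee_pmul2l _ (c^-1)%:E) ?lte_fin ?invr_gt0 //.
  by rewrite muleA -EFinM mulVf ?gt_eqF // mul1e.
Qed.

Lemma bigsum_sum_f_R0 (u : nat -> R) n : \sum_(0 <= k < n.+1) u k = sum_f_R0 u n.
Proof.
elim: n => [|n IH]; first by rewrite big_nat1.
by rewrite big_nat_recr //= IH.
Qed.

Lemma null_mo (N : set R) : lebesgue_null N -> mo N = 0%E.
Proof.
move=> hN; apply/eqP; rewrite eq_le mu_ext_ge0 ?andbT; last first.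
  by move=> ?; exact: wlength_ge0.
apply/lee_addgt0Pr => e e0; rewrite add0e.
have /hN [a [b [ab [hs cov]]]] : Rlt 0 e by apply/RltP.
rewrite measurable_realfun.outer_measure_open_itv_cover.
pose F k := `]a k, b k[%classic : set R.
have le1 : (\sum_(k <oo) wlength idfun (F k) <= e%:E)%E.
  apply: lime_le; first exact: is_cvg_nneseries.
  apply: nearW => n; case: n => [|n]; first by rewrite big_geq // lee_fin ltW.
  rewrite (eq_bigr (fun k => (b k - a k)%:E)); last first.
    by move=> k _; rewrite /F wlength_itv_bnd //; apply/RleP.
  by rewrite sumEFin lee_fin bigsum_sum_f_R0; apply/RleP.
apply: le_trans le1; apply: ereal_inf_lbound; exists F => //; split.
  by move=> k; exists (a k, b k).
move=> x Nx; have [k hk] := cov x Nx; exists k => //.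
by rewrite /F /= in_itv /=; apply/andP; split; apply/RltP; case: hk.
Qed.

Lemma null_cara (N : set R) : mo N = 0%E -> (@measurable _ CT N).
Proof.
move=> N0; apply: le_caratheodory_measurable => X /=.
have -> : mo (X `&` N) = 0%E.
  apply/eqP; rewrite eq_le mu_ext_ge0 ?andbT; last by move=> ?; exact: wlength_ge0.
  by rewrite -N0; apply: le_mu_ext; apply: subIsetr.
by rewrite add0e; apply: le_mu_ext; apply: subIsetl.
Qed.

Lemma borel_cara (B : R -> Prop) : borel B -> (@measurable _ CT B).
Proof.
move=> bB; apply: sub_caratheodory; elim: bB => {B}.
- move=> a b.
  have -> : (fun x => Rlt a x /\ Rlt x b) = `]a, b[%classic.
    apply/funext => x; apply/propext; rewrite /= in_itv /=; split.
      by case=> /RltP -> /RltP ->.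
    by case/andP => /RltP ? /RltP ?.
  exact: measurable_itv.
- by move=> A _ mA; exact: measurableC.
- move=> A _ mA.
  have -> : (fun x => exists n, A n x) = \bigcup_n (A n : set R).
    by apply/funext => x; apply/propext; split; case=> n; [exists n|exists n].
  exact: bigcupT_measurable.
- move=> A B _ mA hAB.
  have -> : B = A; last exact: mA.
  by apply/funext => x; apply/propext; split => /hAB.
Qed.

Lemma lebesgue_measurable_cara (S : R -> Prop) :
  lebesgue_measurable_set S -> (@measurable _ CT S).
Proof.
case=> B [N [bB [nN hS]]].
have N0 := @null_mo N nN.
have -> : (S : set R) = ((B : set R) `&` ~` (N : set R)) `|` ((S : set R) `&` N).
  apply/funext => x; apply/propext; split.
    move=> Sx; case: (pselect (N x)) => Nx; first by right.
    by left; split => //; apply/hS.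
  case=> [[Bx Nx]|[]//]; exact/hS.
apply: measurableU; first apply: measurableI.
- exact: borel_cara.
- apply: measurableC; exact: null_cara.
- apply: null_cara; apply/eqP; rewrite eq_le mu_ext_ge0 ?andbT; last by move=> ?; exact: wlength_ge0.
  by rewrite -N0; apply: le_mu_ext; apply: subIsetr.
Qed.

Lemma lmeas_cara (S : R -> Prop) : lmeas S -> (@measurable _ CT S).
Proof.
elim => {S}.
- by move=> S /lebesgue_measurable_cara.
- move=> a b; apply: sub_caratheodory.
  have -> : (fun x => Rlt a x /\ Rle x b) = `]a, b]%classic.
    apply/funext => x; apply/propext; rewrite /= in_itv /=; split.
      by case=> /RltP -> /RleP ->.
    by case/andP => /RltP ? /RleP ?.
  exact: (@measurable_itv R `]a, b]).
- by move=> S _ mS; exact: measurableC.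
- by move=> S T _ mS _ mT; exact: measurableI.
- move=> S _ mS.
  have -> : (fun x => forall n, S n x) = \bigcap_n (S n : set R).
    by apply/funext => x; apply/propext; split => h n //; apply: h.
  exact: bigcapT_measurable.
Qed.

Lemma mo_oc (a b : R) : a <= b -> mo `]a, b]%classic = (b - a)%:E.
Proof.
move=> ab; rewrite (measurable_mu_extE (wlength idfun)); last exact: is_ocitv.
by apply: wlength_itv_bnd.
Qed.

(* Continuity from below: measurable sets eventually containing every point of
   (1,4] eventually have measure > 5/2 (the full measure being 3). *)
Lemma eventually_large (A : nat -> R -> Prop) :
  (forall m, lmeas (A m)) ->
  (forall m x, A m x -> 1 < x <= 4) ->
  (forall x, 1 < x <= 4 -> exists n, forall m, (n <= m)%nat -> A m x) ->
  exists n, forall m, (n <= m)%nat -> ((5/2)%:E < mo (A m))%E.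
Proof.
move=> lA sA evA.
pose F n : set CT := fun x => forall k, A (n + k)%nat x.
have mF n : measurable (F n) by apply: lmeas_cara; apply: lmeas_cap => k; exact: lA.
have FU : \bigcup_n F n = (`]1, 4]%classic : set R).
  apply/funext => x; apply/propext; split.
    by case=> n _ Fx; have := sA _ _ (Fx 0%nat); rewrite /= in_itv.
  rewrite /= in_itv /= => h.
  have [n hn] := evA x h; exists n => // k; apply: hn; exact: leq_addr.
have mU : measurable (\bigcup_n F n) by apply: bigcupT_measurable.
have ndF : {homo F : n m / (n <= m)%nat >-> (n <= m)%O}.
  move=> n m nm; apply/subsetPset => x Fx k; have := Fx (m - n + k)%nat.
  by rewrite addnA subnKC.
have cv := nondecreasing_cvg_mu (mu := completed_lebesgue_measure) mF mU ndF.
have lim3 : completed_lebesgue_measure (\bigcup_n F n) = 3%:E.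
  rewrite FU; change (mo `]1, 4]%classic = 3%:E); rewrite mo_oc.
    by congr EFin; to_stdlib; lra.
  by apply/RleP; to_stdlib; lra.
have : exists n, ((5/2)%:E < completed_lebesgue_measure (F n))%E.
  apply: contrapT => hn.
  have hle : (limn (completed_lebesgue_measure \o F) <= (5/2)%:E)%E.
    apply: lime_le; first by apply/cvg_ex; eexists; exact: cv.
    apply: nearW => n /=; rewrite leNgt; apply/negP => h; apply: hn; by exists n.
  move: hle; rewrite (cvg_lim _ cv) // => h.
  have : (3%:E <= (5/2)%:E :> \bar R)%E by rewrite -lim3; exact: h.
  by rewrite lee_fin => /RleP; to_stdlib; lra.
case=> n hn; exists n => m nm.
apply: (lt_le_trans hn); change (mo (F n) <= mo (A m))%E.
apply: le_mu_ext => x Fx; have := Fx (m - n)%nat; by rewrite subnKC.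
Qed.

(* If [A m] and [lam m * B m] were disjoint, the set [A m ∪ lam m * B m] of
   (1, 4 lam m] would have measure > 5/2 + 5/2 lam m > 4 lam m - 1. *)
Lemma steinhaus (A B : nat -> R -> Prop) (lam : nat -> R) :
  (forall m, lmeas (A m)) -> (forall m, lmeas (B m)) ->
  (forall m x, A m x -> 1 < x <= 4) -> (forall m x, B m x -> 1 < x <= 4) ->
  (forall m, 1 <= lam m <= 2) ->
  (forall x, 1 < x <= 4 -> exists n, forall m, (n <= m)%nat -> A m x) ->
  (forall x, 1 < x <= 4 -> exists n, forall m, (n <= m)%nat -> B m x) ->
  (forall m v, B m v -> ~ A m (lam m * v)) -> False.
Proof.
move=> lA lB sA sB hl evA evB dis.
have [n1 h1] := @eventually_large A lA sA evA.
have [n2 h2] := @eventually_large B lB sB evB.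
pose m := maxn n1 n2.
have hA := h1 m (leq_maxl _ _); have hB := h2 m (leq_maxr _ _).
pose l := lam m.
have /andP [l1 l2] := hl m; rewrite -/l in l1 l2.
have l0 : 0 < l by apply: lt_le_trans l1.
pose W := [set y : R | B m (y / l)].
pose X := (A m : set R) `|` W.
have hc := @lmeas_cara (A m) (lA m) X.
have e1 : X `&` (A m : set R) = A m by apply/setIidr/subsetUl.
have e2 : X `&` ~` (A m : set R) = W.
  apply/seteqP; split => y.
    by case=> [[//|Wy] _].
  move=> Wy; split; first by right.
  move=> Ay; apply: (dis m (y / l) Wy).
  by rewrite mulrC divfK // gt_eqF.
rewrite e1 e2 in hc.
have sX : X `<=` `]1, 4 * l]%classic.
  move=> y [Ay|Wy]; rewrite /= in_itv /=.
    have /andP [/RltP y1 /RleP y4] := sA _ _ Ay.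
    move/RleP: l1 => l1'; apply/andP; split; [apply/RltP|apply/RleP]; to_stdlib; nra.
  have /andP [/RltP y1 /RleP y4] := sB _ _ Wy.
  move: y1 y4; set t := y / l => y1 y4.
  have ey : y = l * t by rewrite /t mulrC divfK // gt_eqF.
  rewrite ey; clearbody t.
  move/RleP: l1 => l1'; apply/andP; split; [apply/RltP|apply/RleP]; to_stdlib; nra.
have hX : (mo X <= (4 * l - 1)%:E)%E.
  apply: le_trans (le_mu_ext (@wlength R idfun) sX) _; rewrite mo_oc //.
  by move/RleP: l1 => l1'; apply/RleP; to_stdlib; lra.
have hW : ((l * (5/2))%:E < mo W)%E.
  apply: lt_le_trans (@mo_scale l W l0).
  rewrite (_ : [set x : R | W (x * l)] = (B m : set R)); last first.
    apply/funext => x; rewrite /W /=; by rewrite mulfK // gt_eqF.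
  by rewrite EFinM lte_pmul2l // lte_fin.
have : ((5/2 + l * (5/2))%:E < (4 * l - 1)%:E)%E.
  rewrite EFinD; apply: lt_le_trans hX; rewrite hc.
  exact: lteD.
rewrite lte_fin => /RltP; move/RleP: l2 => l2'; to_stdlib; lra.
Qed.

Local Close Scope ring_scope.

(* The same statement with the Stdlib order relations. *)
Lemma steinhaus_R (A B : nat -> R -> Prop) (lam : nat -> R) :
  (forall m, lmeas (A m)) -> (forall m, lmeas (B m)) ->
  (forall m x, A m x -> Rlt 1 x /\ Rle x 4) ->
  (forall m x, B m x -> Rlt 1 x /\ Rle x 4) ->
  (forall m, Rle 1 (lam m) /\ Rle (lam m) 2) ->
  (forall x, Rlt 1 x -> Rle x 4 -> exists n, forall m, Peano.le n m -> A m x) ->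
  (forall x, Rlt 1 x -> Rle x 4 -> exists n, forall m, Peano.le n m -> B m x) ->
  (forall m v, B m v -> ~ A m (Rmult (lam m) v)) -> False.
Proof.
move=> lA lB sA sB hl evA evB dis.
apply: (@steinhaus A B lam lA lB); last exact: dis.
- move=> m x /sA [h1 h2]; apply/andP; split; [apply/RltP|apply/RleP]; to_stdlib; lra.
- move=> m x /sB [h1 h2]; apply/andP; split; [apply/RltP|apply/RleP]; to_stdlib; lra.
- move=> m; have [h1 h2] := hl m; apply/andP; split; apply/RleP; to_stdlib; lra.
- move=> x /andP [/RltP h1 /RleP h2].
  have [n hn] := evA x ltac:(to_stdlib; lra) ltac:(to_stdlib; lra).
  by exists n => m /ssrnat.leP; apply: hn.
- move=> x /andP [/RltP h1 /RleP h2].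
  have [n hn] := evB x ltac:(to_stdlib; lra) ltac:(to_stdlib; lra).
  by exists n => m /ssrnat.leP; apply: hn.
Qed.
End Steinhaus.

Lemma lt_div_l a x z : 0 < z -> (a < x * z <-> a / z < x).
Proof.
intros hz; split; intros h.
- apply (Rmult_lt_reg_r z); [lra|]. replace (a / z * z) with a by (field; lra). exact h.
- replace a with (a / z * z) by (field; lra). apply Rmult_lt_compat_r; lra.
Qed.

Lemma lt_div_r b x z : 0 < z -> (x * z < b <-> x < b / z).
Proof.
intros hz; split; intros h.
- apply (Rmult_lt_reg_r z); [lra|]. replace (b / z * z) with b by (field; lra). exact h.
- replace b with (b / z * z) by (field; lra). apply Rmult_lt_compat_r; lra.
Qed.

Lemma borel_dil (S : R -> Prop) (z : R) : 0 < z -> borel S -> borel (fun x => S (x * z)).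
Proof.
intros hz hS. induction hS as [a b|A _ IH|A _ IH|A B _ IH hAB].
- apply borel_ext with (fun x => a / z < x < b / z); [apply borel_interval|].
  intros x; rewrite (lt_div_l a x z hz), (lt_div_r b x z hz); tauto.
- exact (borel_compl _ IH).
- exact (borel_union (fun n x => A n (x * z)) IH).
- apply borel_ext with (fun x => A (x * z)); [exact IH|].
  intros x; apply hAB.
Qed.

Lemma sum_f_R0_div (u : nat -> R) z m :
  sum_f_R0 (fun n => u n / z) m = sum_f_R0 u m / z.
Proof. induction m; simpl; [reflexivity|]. rewrite IHm. unfold Rdiv. ring. Qed.

Lemma null_dil (N : R -> Prop) (z : R) :
  0 < z -> lebesgue_null N -> lebesgue_null (fun x => N (x * z)).
Proof.
intros hz hN eps he.
destruct (hN (eps * z)) as [a [b [hab [hs hc]]]]; [nra|].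
exists (fun n => a n / z), (fun n => b n / z). split; [|split].
- intros n. unfold Rdiv.
  apply Rmult_le_compat_r; [left; apply Rinv_0_lt_compat; lra|apply hab].
- intros m.
  replace (fun n => b n / z - a n / z) with (fun n => (b n - a n) / z)
    by (apply functional_extensionality; intros; field; lra).
  rewrite sum_f_R0_div. apply (Rmult_le_reg_r z); [lra|].
  replace (sum_f_R0 (fun n => b n - a n) m / z * z)
    with (sum_f_R0 (fun n => b n - a n) m) by (field; lra).
  apply hs.
- intros x hx. destruct (hc _ hx) as [n [h1 h2]]. exists n.
  rewrite <- lt_div_l, <- lt_div_r by exact hz. lra.
Qed.

Lemma lebesgue_measurable_dil (S : R -> Prop) (z : R) : 0 < z ->
  lebesgue_measurable_set S -> lebesgue_measurable_set (fun x => S (x * z)).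
Proof.
intros hz [B [N [hB [hN hS]]]].
exists (fun x => B (x * z)), (fun x => N (x * z)).
split; [apply borel_dil|split; [apply null_dil|]]; auto.
Qed.

Lemma sv_bounds (L : R -> R) a lam b B :
  (forall x, a <= x -> 0 < L x) -> slowly_varying L -> 0 < lam -> b < 1 < B ->
  exists M, forall y, M <= y -> b * L y <= L (lam * y) <= B * L y.
Proof.
intros hpos hsv hl hbB.
destruct (hsv lam hl (Rmin (1 - b) (B - 1)) ltac:(apply Rmin_glb_lt; lra)) as [M hM].
exists (Rmax M a). intros y hy.
assert (m1 := Rmax_l M a). assert (m2 := Rmax_r M a).
assert (hLy : 0 < L y) by (apply hpos; lra).
specialize (hM y ltac:(lra)). apply Rabs_def2 in hM. destruct hM as [h1 h2].
assert (r1 := Rmin_l (1 - b) (B - 1)). assert (r2 := Rmin_r (1 - b) (B - 1)).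
assert (e : L (lam * y) = (L (lam * y) / L y) * L y) by (field; lra).
rewrite e. split; apply Rmult_le_compat_r; lra.
Qed.

Lemma sv_ratio_eventually (L : R -> R) (a x : R) (zs : nat -> R) :
  (forall y, a <= y -> 0 < L y) -> slowly_varying L -> 0 < x ->
  (forall m, a <= zs m /\ INR m <= zs m) ->
  exists n, forall m, (n <= m)%nat ->
    L (zs m) / 2 < L (x * zs m) < 3 / 2 * L (zs m).
Proof.
intros hpos hsv hx hz.
destruct (hsv x hx (1/2) ltac:(lra)) as [M hM].
destruct (INR_unbounded M) as [n hn].
exists n. intros m hm.
destruct (hz m) as [hz1 hz2]. apply le_INR in hm.
assert (hL : 0 < L (zs m)) by (apply hpos; lra).
specialize (hM (zs m) ltac:(lra)). apply Rabs_def2 in hM.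
assert (e : L (x * zs m) = (L (x * zs m) / L (zs m)) * L (zs m)) by (field; lra).
rewrite e. split; nra.
Qed.

Definition uniform_ratio_bound (L : R -> R) (z0 : R) : Prop :=
  forall z, z0 <= z -> forall lam, 1 <= lam <= 2 -> L z <= 4 * L (lam * z).

Lemma uniform_bound_counterexample (L : R -> R) (a : R) :
  ~ (exists z0, uniform_ratio_bound L z0) ->
  exists (z lam : nat -> R), forall n,
    Rmax a (INR n) <= z n /\ 1 <= lam n <= 2 /\ 4 * L (lam n * z n) < L (z n).
Proof.
intros H.
set (P := fun n (p : R * R) => Rmax a (INR n) <= fst p /\ (1 <= snd p <= 2) /\
   4 * L (snd p * fst p) < L (fst p)).
assert (Hb : forall n : nat, exists p, P n p).
{ intro n. apply NNPP; intro Hn. apply H. exists (Rmax a (INR n)). intros z hz lam hl.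
  apply Rnot_lt_le; intro hlt. apply Hn. exists (z, lam). unfold P; simpl; auto. }
exists (fun n => fst (epsilon (inhabits (0,0)) (P n))),
       (fun n => snd (epsilon (inhabits (0,0)) (P n))).
intro n. exact (epsilon_spec _ (P n) (Hb n)).
Qed.

(* Along a
   counterexample sequence, the sets where [L(x z_m)] is not small and where
   [L(x lam_m z_m)] is not large would contradict the Steinhaus lemma. *)
Lemma sv_uniform_bound (L : R -> R) (a : R) : 0 < a ->
  (forall x, a <= x -> 0 < L x) -> measurable_on_ray L a -> slowly_varying L ->
  exists z0, uniform_ratio_bound L z0.
Proof.
intros ha hpos hm hsv.
apply NNPP; intro H.
destruct (uniform_bound_counterexample L a H) as [z [lam hp]].
set (w := fun n => lam n * z n).
assert (hz : forall n, a <= z n /\ INR n <= z n).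
{ intro n. destruct (hp n) as [h _]. assert (h1 := Rmax_l a (INR n)).
  assert (h2 := Rmax_r a (INR n)). lra. }
assert (hw : forall n, a <= w n /\ INR n <= w n).
{ intro n. destruct (hz n), (hp n) as [_ [hl _]]. unfold w. split; nra. }
set (A := fun m x => (1 < x /\ x <= 4) /\ (a <= x * z m /\ L (z m) / 2 < L (x * z m))).
set (B := fun m x => (1 < x /\ x <= 4) /\ ~ (a <= x * w m /\ 2 * L (w m) < L (x * w m))).
apply (Steinhaus.steinhaus_R A B lam).
- intro m. apply lmeas_inter; [apply lmeas_oc|].
  apply lmeas_base, (lebesgue_measurable_dil (fun y => a <= y /\ L (z m) / 2 < L y)); [|apply hm].
  destruct (hz m); lra.
- intro m. apply lmeas_inter; [apply lmeas_oc|]. apply lmeas_compl.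
  apply lmeas_base, (lebesgue_measurable_dil (fun y => a <= y /\ 2 * L (w m) < L y)); [|apply hm].
  destruct (hw m); lra.
- intros m x hx; apply hx.
- intros m x hx; apply hx.
- intro m; apply hp.
- intros x h1 h2. destruct (sv_ratio_eventually L a x z hpos hsv ltac:(lra) hz) as [n hn].
  exists n. intros m hmn. specialize (hn m hmn). destruct (hz m) as [hz1 _].
  unfold A. split; [lra|split; [nra|lra]].
- intros x h1 h2. destruct (sv_ratio_eventually L a x w hpos hsv ltac:(lra) hw) as [n hn].
  exists n. intros m hmn. specialize (hn m hmn). destruct (hw m) as [hw1 _].
  unfold B. split; [lra|]. intros [_ hc]. lra.
- intros m v [[hv1 hv2] hB] [_ [hA1 hA2]].
  apply hB. replace (v * w m) with (lam m * v * z m) by (unfold w; ring).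
  split; [exact hA1|]. destruct (hp m) as [_ [_ hbad]]. fold (w m) in hbad. lra.
Qed.

Section SpectralDF.
Variable D : R -> R.
Hypothesis hD : spectral_df D.

Lemma D_mono x y : x <= y -> D x <= D y.
Proof. destruct hD as [h _]; apply h. Qed.

Lemma left_lim_le a l : left_lim D a l -> l <= D a.
Proof.
intros hl. apply Rnot_lt_le; intro hlt.
destruct (hl (l - D a)) as [d [hd hy]]; [lra|].
specialize (hy (a - d / 2)). assert (h := D_mono (a - d/2) a).
assert (hh : Rabs (D (a - d / 2) - l) < l - D a) by (apply hy; lra).
apply Rabs_def2 in hh. lra.
Qed.

Lemma left_lim_unique a l1 l2 : left_lim D a l1 -> left_lim D a l2 -> l1 = l2.
Proof.
intros h1 h2. apply NNPP; intro hne.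
assert (he : 0 < Rabs (l1 - l2) / 2)
  by (apply Rdiv_lt_0_compat; [apply Rabs_pos_lt; lra|lra]).
destruct (h1 _ he) as [d1 [hd1 hy1]]. destruct (h2 _ he) as [d2 [hd2 hy2]].
set (y := a - Rmin d1 d2 / 2).
assert (hm1 := Rmin_l d1 d2). assert (hm2 := Rmin_r d1 d2).
assert (hmp : 0 < Rmin d1 d2) by (apply Rmin_glb_lt; lra).
assert (a1 : Rabs (D y - l1) < Rabs (l1 - l2) / 2) by (apply hy1; unfold y; lra).
assert (a2 : Rabs (D y - l2) < Rabs (l1 - l2) / 2) by (apply hy2; unfold y; lra).
assert (Rabs (l1 - l2) <= Rabs (D y - l1) + Rabs (D y - l2)).
{ replace (l1 - l2) with (- (D y - l1) + (D y - l2)) by ring.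
  eapply Rle_trans; [apply Rabs_triang|]. rewrite Rabs_Ropp. lra. }
lra.
Qed.

Lemma D_le_PI x : D x <= D PI.
Proof.
destruct hD as [_ [_ [_ h4]]]. destruct (Rle_dec x PI).
- apply D_mono; auto.
- rewrite h4; lra.
Qed.

Lemma D_nonneg x : 0 <= D x.
Proof.
destruct hD as [_ [_ [h3 _]]].
rewrite <- (h3 (Rmin x (- PI) - 1)) by (assert (h:= Rmin_r x (-PI)); lra).
apply D_mono. assert (h:= Rmin_l x (-PI)); lra.
Qed.

Hypothesis hS : symmetric_df D.

Lemma G_eq x : G D x = 2 * D x - D PI.
Proof.
unfold G, Fcc, left_limit.
assert (e : left_lim D (- x) (epsilon (inhabits 0) (fun l => left_lim D (- x) l))).
{ apply epsilon_spec. exists (D PI - D x). apply hS. }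
rewrite (left_lim_unique _ _ _ e (hS x)). ring.
Qed.

Lemma D_neg_lb x : D PI - D x <= D (- x).
Proof. apply left_lim_le, hS. Qed.

Lemma G_mono x y : x <= y -> G D x <= G D y.
Proof. intro h; rewrite !G_eq; assert (h' := D_mono _ _ h); lra. Qed.

Lemma G_le_PI x : G D x <= D PI.
Proof. rewrite G_eq; assert (h := D_le_PI x); lra. Qed.

Lemma G_nonneg x : 0 <= x -> 0 <= G D x.
Proof.
intro hx. rewrite G_eq. assert (h1 := D_neg_lb x). assert (h2 := D_mono (-x) x). lra.
Qed.

Lemma D_window b mu : 0 <= mu -> D b - D (- b - mu) <= G D (b + mu).
Proof.
intro hmu. rewrite G_eq. assert (h1 := D_neg_lb (b + mu)).
replace (- (b + mu)) with (- b - mu) in h1 by ring.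
assert (h2 := D_mono b (b + mu)). lra.
Qed.

End SpectralDF.

Definition fsum {A} (f : A -> R) (l : list A) := fold_right Rplus 0 (map f l).

Lemma fsum_cons {A} (f : A -> R) x l : fsum f (x :: l) = f x + fsum f l.
Proof. reflexivity. Qed.
Lemma fsum_plus {A} (f g : A -> R) l : fsum (fun x => f x + g x) l = fsum f l + fsum g l.
Proof. induction l; unfold fsum in *; simpl; [ring|]. rewrite IHl; ring. Qed.
Lemma fsum_scal_l {A} (f : A -> R) c l : fsum (fun x => c * f x) l = c * fsum f l.
Proof. induction l; unfold fsum in *; simpl; [ring|]. rewrite IHl; ring. Qed.
Lemma fsum_scal_r {A} (f : A -> R) c l : fsum (fun x => f x * c) l = fsum f l * c.
Proof. induction l; unfold fsum in *; simpl; [ring|]. rewrite IHl; ring. Qed.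
Lemma fsum_ext {A} (f g : A -> R) l : (forall x, f x = g x) -> fsum f l = fsum g l.
Proof. intro h; induction l; unfold fsum in *; simpl; [ring|]. rewrite IHl, h; ring. Qed.
Lemma fsum_le {A} (f g : A -> R) l : (forall x, f x <= g x) -> fsum f l <= fsum g l.
Proof. intro h; induction l; unfold fsum in *; simpl; [lra|]. specialize (h a); lra. Qed.
Lemma fsum_const {A} c (l : list A) : fsum (fun _ => c) l = INR (length l) * c.
Proof.
induction l; unfold fsum in *; simpl length; [simpl; ring|].
rewrite S_INR; simpl; rewrite IHl; ring.
Qed.

Lemma fsum_seqS (f : nat -> R) s n : fsum f (seq s (S n)) = fsum f (seq s n) + f (s + n)%nat.
Proof.
revert s; induction n; intro s.
- unfold fsum; simpl. rewrite Nat.add_0_r; ring.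
- change (seq s (S (S n))) with (s :: seq (S s) (S n)).
  rewrite fsum_cons, IHn. change (seq s (S n)) with (s :: seq (S s) n).
  rewrite fsum_cons. replace (S s + n)%nat with (s + S n)%nat by lia. ring.
Qed.

Lemma rs_sum_zero D a b N : rs_sum (fun _ => 0) D a b N = 0.
Proof. unfold rs_sum. apply sum_eq_R0. intros; ring. Qed.

Lemma rs_sum_plus f g D a b N :
  rs_sum (fun t => f t + g t) D a b N = rs_sum f D a b N + rs_sum g D a b N.
Proof. unfold rs_sum. rewrite <- plus_sum. apply sum_eq. intros; ring. Qed.

Lemma cv_fsum {A} (F : A -> R -> R) (c : A -> R) l D a b :
  (forall x, Un_cv (rs_sum (F x) D a b) (c x)) ->
  Un_cv (rs_sum (fun t => fsum (fun x => F x t) l) D a b) (fsum c l).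
Proof.
intro h. induction l as [|y l IHl].
- intros eps he. exists 0%nat. intros n _. rewrite rs_sum_zero. unfold R_dist, fsum; simpl.
  rewrite Rminus_0_r, Rabs_R0; exact he.
- eapply Un_cv_ext.
  + intro N. symmetry. apply (rs_sum_plus (F y) (fun t => fsum (fun x => F x t) l)).
  + rewrite fsum_cons. apply CV_plus; [apply h|apply IHl].
Qed.

Definition fejer (n : nat) (t : R) : R :=
  fsum (fun j => fsum (fun k => cos (t * IZR (Z.of_nat k - Z.of_nat j))) (seq 1 n)) (seq 1 n).

Lemma varS_spectral D r n : is_spectral_measure_of D r -> spec_int (fejer n) D (varS r n).
Proof.
intro h. unfold spec_int, fejer.
change (varS r n) with
  (fsum (fun j => fsum (fun k => r (Z.of_nat k - Z.of_nat j)%Z) (seq 1 n)) (seq 1 n)).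
apply (cv_fsum (fun j t => fsum (fun k => cos (t * IZR (Z.of_nat k - Z.of_nat j))) (seq 1 n))).
intro j. apply (cv_fsum (fun k t => cos (t * IZR (Z.of_nat k - Z.of_nat j)))).
intro k. apply (h (Z.of_nat k - Z.of_nat j)%Z).
Qed.

Lemma fejer_le_sq n t : fejer n t <= INR n * INR n.
Proof.
unfold fejer. eapply Rle_trans.
- apply fsum_le. intro j. apply (fsum_le _ (fun _ => 1)). intro k. apply COS_bound.
- rewrite fsum_const, fsum_const, length_seq. lra.
Qed.

Definition cos_sum n t := fsum (fun k => cos (t * INR k)) (seq 1 n).
Definition sin_sum n t := fsum (fun k => sin (t * INR k)) (seq 1 n).

Lemma fejer_eq n t : fejer n t = cos_sum n t * cos_sum n t + sin_sum n t * sin_sum n t.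
Proof.
unfold fejer.
rewrite (fsum_ext _ (fun j => cos_sum n t * cos (t * INR j) + sin_sum n t * sin (t * INR j))).
- rewrite fsum_plus, fsum_scal_l, fsum_scal_l. reflexivity.
- intro j.
  rewrite (fsum_ext _ (fun k => cos (t * INR k) * cos (t * INR j)
                                + sin (t * INR k) * sin (t * INR j))).
  + rewrite fsum_plus, fsum_scal_r, fsum_scal_r. unfold cos_sum, sin_sum. ring.
  + intro k. rewrite minus_IZR, <- !INR_IZR_INZ.
    replace (t * (INR k - INR j)) with (t * INR k - t * INR j) by ring.
    apply cos_minus.
Qed.

Lemma fejer_nonneg n t : 0 <= fejer n t.
Proof. rewrite fejer_eq. nra. Qed.

Lemma cos_sum_tel n t :
  2 * sin (t / 2) * cos_sum n t = sin (INR n * t + t / 2) - sin (t / 2).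
Proof.
induction n.
- unfold cos_sum, fsum; simpl. replace (0 * t + t / 2) with (t/2) by ring. ring.
- unfold cos_sum in *. rewrite fsum_seqS, Rmult_plus_distr_l, IHn.
  replace (1 + n)%nat with (S n) by lia. rewrite S_INR.
  replace ((INR n + 1) * t + t / 2) with (t * (INR n + 1) + t / 2) by ring.
  replace (INR n * t + t / 2) with (t * (INR n + 1) - t / 2) by field.
  rewrite sin_plus, sin_minus. ring.
Qed.

Lemma sin_sum_tel n t :
  2 * sin (t / 2) * sin_sum n t = cos (t / 2) - cos (INR n * t + t / 2).
Proof.
induction n.
- unfold sin_sum, fsum; simpl. replace (0 * t + t / 2) with (t/2) by ring. ring.
- unfold sin_sum in *. rewrite fsum_seqS, Rmult_plus_distr_l, IHn.
  replace (1 + n)%nat with (S n) by lia. rewrite S_INR.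
  replace ((INR n + 1) * t + t / 2) with (t * (INR n + 1) + t / 2) by ring.
  replace (INR n * t + t / 2) with (t * (INR n + 1) - t / 2) by field.
  rewrite cos_plus, cos_minus. ring.
Qed.

(* [4 sin^2(t/2) K_n(t) = |e^{i(n+1/2)t} - e^{it/2}|^2 <= 4]. *)
Lemma fejer_sin n t : fejer n t * (sin (t / 2) * sin (t / 2)) <= 1.
Proof.
assert (h1 := cos_sum_tel n t). assert (h2 := sin_sum_tel n t).
rewrite fejer_eq.
set (s1 := sin (INR n * t + t / 2)) in *. set (c1 := cos (INR n * t + t / 2)) in *.
set (s0 := sin (t / 2)) in *. set (c0 := cos (t / 2)) in *.
assert (e1 : s1 * s1 + c1 * c1 = 1)
  by (unfold s1, c1; pose proof (sin2_cos2 (INR n * t + t / 2)); unfold Rsqr in *; lra).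
assert (e0 : s0 * s0 + c0 * c0 = 1)
  by (unfold s0, c0; pose proof (sin2_cos2 (t / 2)); unfold Rsqr in *; lra).
assert (E : 4 * ((cos_sum n t * cos_sum n t + sin_sum n t * sin_sum n t) * (s0 * s0)) =
   (s1 - s0) * (s1 - s0) + (c0 - c1) * (c0 - c1))
  by (rewrite <- h1, <- h2; ring).
assert (P : 0 <= (s1 + s0) * (s1 + s0) + (c1 + c0) * (c1 + c0))
  by (pose proof (Rle_0_sqr (s1 + s0)); pose proof (Rle_0_sqr (c1 + c0)); unfold Rsqr in *; lra).
assert (E2 : (s1 - s0) * (s1 - s0) + (c0 - c1) * (c0 - c1)
             + ((s1 + s0) * (s1 + s0) + (c1 + c0) * (c1 + c0))
             = 2 * (s1 * s1 + c1 * c1) + 2 * (s0 * s0 + c0 * c0)) by ring.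
lra.
Qed.

Lemma sin_lb_third u : 0 <= u <= 2 -> u <= PI -> u / 3 <= sin u.
Proof.
intros hu hp. destruct (sin_bound u 0 (proj1 hu) hp) as [h _].
unfold sin_approx, sin_term in h. simpl in h.
assert (u * (u * u) <= 4 * u) by nra. lra.
Qed.

Lemma sin_half_lb t : Rabs t <= PI -> t * t / 36 <= sin (t / 2) * sin (t / 2).
Proof.
intro ht. assert (hP := PI_4). assert (hP0 := PI_RGT_0).
destruct (Rle_dec 0 t) as [h0|h0].
- rewrite Rabs_right in ht by lra.
  assert (t / 2 / 3 <= sin (t/2)) by (apply sin_lb_third; lra). nra.
- rewrite Rabs_left in ht by lra.
  assert (h : -t / 2 / 3 <= sin (-t/2)) by (apply sin_lb_third; lra).
  replace (- t / 2) with (- (t / 2)) in h by field. rewrite sin_neg in h. nra.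
Qed.

Lemma fejer_le_inv n t : 0 < Rabs t <= PI -> fejer n t <= 36 / (t * t).
Proof.
intros [h1 h2]. assert (ht : 0 < t * t).
{ destruct (Rle_dec 0 t); [rewrite Rabs_right in h1 by lra|rewrite Rabs_left in h1 by lra]; nra. }
assert (hs := sin_half_lb t h2). assert (hk := fejer_sin n t).
assert (hk0 := fejer_nonneg n t).
assert (tn : t <> 0) by (intro e; subst; lra).
apply (Rmult_le_reg_r (t * t)); [exact ht|].
replace (36 / (t * t) * (t * t)) with 36 by (field; exact tn).
assert (fejer n t * (t * t / 36) <= 1)
  by (eapply Rle_trans; [|exact hk]; apply Rmult_le_compat_l; lra).
assert (fejer n t * (t * t) = 36 * (fejer n t * (t * t / 36))) by field.
lra.
Qed.

Definition xpt a b N i := a + (b - a) * INR i / INR (S N).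

Lemma xpt_0 a b N : xpt a b N 0 = a.
Proof.
assert (h : INR (S N) <> 0) by (apply not_0_INR; lia).
unfold xpt. rewrite INR_0. field. exact h.
Qed.

Lemma xpt_N a b N : xpt a b N (S N) = b.
Proof. assert (h : INR (S N) <> 0) by (apply not_0_INR; lia). unfold xpt. field. exact h. Qed.

Lemma xpt_step a b N i : xpt a b N (S i) = xpt a b N i + (b - a) / INR (S N).
Proof.
assert (h : INR (S N) <> 0) by (apply not_0_INR; lia).
unfold xpt. rewrite (S_INR i). field. exact h.
Qed.

Lemma xpt_le_b a b N i : a <= b -> (i <= S N)%nat -> xpt a b N i <= b.
Proof.
intros hab hi. unfold xpt. assert (h := lt_0_INR (S N) ltac:(lia)).
apply le_INR in hi. apply (Rmult_le_reg_r (INR (S N))); [lra|].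
replace ((a + (b - a) * INR i / INR (S N)) * INR (S N))
  with (a * INR (S N) + (b - a) * INR i) by (field; lra).
nra.
Qed.

Lemma rs_tel f D a b N (Psi : R -> R) :
  (forall i, (i <= N)%nat -> f (xpt a b N (S i)) * (D (xpt a b N (S i)) - D (xpt a b N i))
      <= Psi (xpt a b N (S i)) - Psi (xpt a b N i)) ->
  rs_sum f D a b N <= Psi b - Psi a.
Proof.
intro h.
assert (gen : forall m, (m <= N)%nat ->
  sum_f_R0 (fun i => f (xpt a b N (S i)) * (D (xpt a b N (S i)) - D (xpt a b N i))) m
  <= Psi (xpt a b N (S m)) - Psi (xpt a b N 0)).
{ induction m; intro hm; simpl.
  - apply h; lia.
  - specialize (IHm ltac:(lia)). specialize (h (S m) hm). lra. }
specialize (gen N (le_n N)). rewrite xpt_N, xpt_0 in gen. exact gen.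
Qed.

Lemma sum_ge_term (g : nat -> R) m k :
  (forall j, 0 <= g j) -> (k <= m)%nat -> g k <= sum_f_R0 g m.
Proof.
intros hg hk. induction m.
- replace k with 0%nat by lia. simpl; lra.
- simpl. destruct (Nat.eq_dec k (S m)) as [e|ne].
  + subst. assert (0 <= sum_f_R0 g m) by (apply cond_pos_sum; exact hg). lra.
  + specialize (IHm ltac:(lia)). specialize (hg (S m)). lra.
Qed.

Definition clamp u v y := Rmax u (Rmin v y).

Lemma clamp_mono u v x y : x <= y -> clamp u v x <= clamp u v y.
Proof.
intro h. unfold clamp. apply Rle_max_compat_l.
unfold Rmin. destruct (Rle_dec v x), (Rle_dec v y); lra.
Qed.
Lemma clamp_id u v y : u <= y -> y <= v -> clamp u v y = y.
Proof. intros h1 h2. unfold clamp. rewrite Rmin_right by lra. rewrite Rmax_right; lra. Qed.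
Lemma clamp_le u v y : u <= v -> clamp u v y <= v.
Proof. intro h. unfold clamp. apply Rmax_lub; [lra|apply Rmin_l]. Qed.
Lemma clamp_ge u v y : u <= clamp u v y.
Proof. unfold clamp. apply Rmax_l. Qed.

(* Covering bound for Riemann-Stieltjes sums of a nonnegative-weighted
   integrand: if every [y ∈ [-pi,pi]] lies in some window [[-bb k, bb k]]
   on which [f y <= w k], the sum is at most [sum_k w k * F(window k)],
   each window widened to the left by the mesh [mu].  The dominating
   function is [Psi y = sum_k w k D(clamp (-bb k - mu) (bb k) y)]. *)
Lemma rs_bound D f N m (bb w : nat -> R) :
  spectral_df D ->
  (forall k, 0 <= w k) -> (forall k, 0 <= bb k) ->
  (forall y, -PI <= y <= PI -> exists k, (k <= m)%nat /\ Rabs y <= bb k /\ f y <= w k) ->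
  rs_sum f D (-PI-1) PI N <=
  sum_f_R0 (fun k => w k * (D (bb k) - D (- bb k - (PI - (-PI - 1)) / INR (S N)))) m.
Proof.
intros hD hw hb hcov.
set (mu := (PI - (-PI - 1)) / INR (S N)).
assert (hmu : 0 < mu).
{ unfold mu. apply Rdiv_lt_0_compat; [assert (h := PI_RGT_0); lra|apply lt_0_INR; lia]. }
set (Psi := fun y => sum_f_R0 (fun k => w k * D (clamp (- bb k - mu) (bb k) y)) m).
eapply Rle_trans; [apply (rs_tel f D (-PI-1) PI N Psi)|].
- intros i hi. set (x := xpt (-PI-1) PI N i). set (y := xpt (-PI-1) PI N (S i)).
  assert (hxy : y = x + mu) by (unfold y, x, mu; apply xpt_step).
  assert (hyP : y <= PI) by (apply xpt_le_b; [assert (h := PI_RGT_0); lra|lia]).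
  assert (eq : Psi y - Psi x = sum_f_R0 (fun k => w k *
     (D (clamp (- bb k - mu) (bb k) y) - D (clamp (- bb k - mu) (bb k) x))) m).
  { unfold Psi. rewrite <- minus_sum. apply sum_eq. intros; ring. }
  rewrite eq.
  assert (nonneg : forall k, 0 <= w k *
     (D (clamp (- bb k - mu) (bb k) y) - D (clamp (- bb k - mu) (bb k) x))).
  { intro k. apply Rmult_le_pos; [apply hw|].
    assert (h := D_mono D hD _ _ (clamp_mono (- bb k - mu) (bb k) x y ltac:(lra))). lra. }
  destruct (Rlt_dec y (-PI)) as [hy|hy].
  + destruct hD as [_ [_ [h3 _]]]. rewrite (h3 y hy), (h3 x ltac:(lra)).
    replace (f y * (0 - 0)) with 0 by ring. apply cond_pos_sum; exact nonneg.
  + destruct (hcov y ltac:(lra)) as [k [hk [hyk hfk]]].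
    eapply Rle_trans; [|apply (sum_ge_term _ m k nonneg hk)]. simpl.
    assert (hy1 := Rle_abs y). assert (hy2 := Rle_abs (- y)). rewrite Rabs_Ropp in hy2.
    rewrite (clamp_id _ _ y) by lra. rewrite (clamp_id _ _ x) by lra.
    assert (h := D_mono D hD x y ltac:(lra)).
    apply Rmult_le_compat_r; lra.
- unfold Psi. rewrite <- minus_sum. apply sum_Rle. intros k _.
  rewrite <- Rmult_minus_distr_l. apply Rmult_le_compat_l; [apply hw|].
  assert (h1 := D_mono D hD _ _ (clamp_le (- bb k - mu) (bb k) PI ltac:(specialize (hb k); lra))).
  assert (h2 := D_mono D hD _ _ (clamp_ge (- bb k - mu) (bb k) (-PI-1))).
  fold mu. lra.
Qed.

Lemma cv_le (u : nat -> R) l U :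
  Un_cv u l -> (exists N0, forall N, (N0 <= N)%nat -> u N <= U) -> l <= U.
Proof.
intros hc [N0 hN]. apply Rnot_lt_le; intro hlt.
destruct (hc (l - U)) as [N1 hN1]; [lra|].
specialize (hN1 (max N0 N1) ltac:(lia)). specialize (hN (max N0 N1) ltac:(lia)).
unfold R_dist in hN1. apply Rabs_def2 in hN1. lra.
Qed.

Lemma varS_cover_bound D r n m (bb w : nat -> R) eps0 :
  spectral_df D -> symmetric_df D -> is_spectral_measure_of D r ->
  0 < eps0 -> (forall k, 0 <= w k) -> (forall k, eps0 <= bb k) ->
  (forall y, -PI <= y <= PI -> exists k, (k <= m)%nat /\ Rabs y <= bb k /\ fejer n y <= w k) ->
  varS r n <= sum_f_R0 (fun k => w k * G D (2 * bb k)) m.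
Proof.
intros hD hS hsp he hw hb hcov.
apply (cv_le _ _ _ (varS_spectral D r n hsp)).
destruct (INR_unbounded ((PI - (- PI - 1)) / eps0)) as [N0 hN0].
exists N0. intros N hN.
assert (hb' : forall k, 0 <= bb k) by (intro k; specialize (hb k); lra).
eapply Rle_trans; [exact (rs_bound D (fejer n) N m bb w hD hw hb' hcov)|].
apply sum_Rle. intros k _. apply Rmult_le_compat_l; [apply hw|].
set (mu := (PI - (- PI - 1)) / INR (S N)).
assert (hP := PI_RGT_0).
assert (hmu0 : 0 <= mu)
  by (unfold mu; apply Rmult_le_pos; [lra|left; apply Rinv_0_lt_compat, lt_0_INR; lia]).
assert (hmu : mu <= eps0).
{ unfold mu. apply le_INR in hN. rewrite S_INR.
  apply (Rmult_le_reg_r (INR N + 1)); [assert (h := pos_INR N); lra|].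
  unfold Rdiv. rewrite Rmult_assoc, Rinv_l by (assert (h := pos_INR N); lra).
  apply (Rmult_lt_compat_r eps0) in hN0; [|exact he].
  unfold Rdiv in hN0. rewrite Rmult_assoc, Rinv_l in hN0 by lra. nra. }
eapply Rle_trans; [apply (D_window D hD hS (bb k) mu hmu0)|].
apply (G_mono D hD hS). specialize (hb k). lra.
Qed.

Lemma last_index_satisfying (P : nat -> Prop) :
  P 0%nat -> ~ (forall k, P k) -> exists J, P J /\ ~ P (S J).
Proof.
intros h0 hn. apply NNPP; intro hc. apply hn. intro k. induction k; [exact h0|].
apply NNPP; intro hk. apply hc. exists k. auto.
Qed.

Lemma pow2_ge n : INR n + 1 <= 2 ^ n.
Proof. induction n; [simpl; lra|]. rewrite S_INR. simpl. assert (h := pos_INR n). lra. Qed.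

Lemma pow2_pos n : 0 < 2 ^ n.
Proof. apply pow_lt; lra. Qed.

Lemma pow2_mono a b : (a <= b)%nat -> 2 ^ a <= 2 ^ b.
Proof. intro h. apply Rle_pow; [lra|exact h]. Qed.

Lemma pow2_unbounded X : exists k, X < 2 ^ k.
Proof. destruct (INR_unbounded X) as [k hk]. exists k. assert (h := pow2_ge k). lra. Qed.

(* Weights of the dyadic decomposition of [[-pi,pi]] at base scale [eps]:
   [n^2] on [|t| <= eps], and [144 / (eps 2^k)^2] on the annulus
   [eps 2^(k-1) < |t| <= eps 2^k]. *)
Definition dyadic_weight (n : nat) (eps : R) (k : nat) : R :=
  match k with 0%nat => INR n * INR n | S _ => 144 / ((eps * 2 ^ k) * (eps * 2 ^ k)) end.

Lemma dyadic_weight_nonneg n eps k : 0 < eps -> 0 <= dyadic_weight n eps k.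
Proof.
intro he. destruct k; simpl.
- apply Rmult_le_pos; apply pos_INR.
- assert (h := pow2_pos k). apply Rlt_le, Rdiv_lt_0_compat; [lra|].
  assert (h2 : 0 < eps * (2 * 2 ^ k)) by nra. apply Rmult_lt_0_compat; exact h2.
Qed.

Lemma fejer_dyadic_cover n eps m y : 0 < eps -> PI <= eps * 2 ^ m -> -PI <= y <= PI ->
  exists k, (k <= m)%nat /\ Rabs y <= eps * 2 ^ k /\ fejer n y <= dyadic_weight n eps k.
Proof.
intros he hm hy.
assert (hyP : Rabs y <= PI) by (apply Rabs_le; lra).
destruct (Rle_dec (Rabs y) eps) as [h0|h0].
- exists 0%nat. split; [lia|]. simpl. split; [lra|]. apply fejer_le_sq.
- destruct (last_index_satisfying (fun j => eps * 2 ^ j < Rabs y)) as [J [hJ1 hJ2]].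
  + simpl; lra.
  + intro hall. specialize (hall m). lra.
  + assert (hJm : (J < m)%nat).
    { destruct (Nat.lt_ge_cases J m) as [h|h]; [exact h|].
      assert (h' := pow2_mono _ _ h). nra. }
    exists (S J). split; [lia|]. split; [lra|].
    assert (hp := pow2_pos J).
    assert (hy0 : 0 < Rabs y) by nra.
    eapply Rle_trans; [apply fejer_le_inv; split; [exact hy0|exact hyP]|].
    simpl dyadic_weight. change (2 ^ S J) with (2 * 2 ^ J).
    assert (hyy : y * y = Rabs y * Rabs y).
    { destruct (Rle_dec 0 y); [rewrite Rabs_right by lra|rewrite Rabs_left by lra]; ring. }
    rewrite hyy. set (e := eps * 2 ^ J) in *.
    replace (eps * (2 * 2 ^ J)) with (2 * e) by (unfold e; ring).
    assert (he0 : 0 < e) by (unfold e; nra).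
    apply (Rmult_le_reg_r (Rabs y * Rabs y * (e * e))); [repeat apply Rmult_lt_0_compat; lra|].
    replace (36 / (Rabs y * Rabs y) * (Rabs y * Rabs y * (e * e))) with (36 * (e * e))
      by (field; lra).
    replace (144 / (2 * e * (2 * e)) * (Rabs y * Rabs y * (e * e))) with (36 * (Rabs y * Rabs y))
      by (field; lra).
    nra.
Qed.

Lemma dyadic_sum_split n eps J t0 (Gf : R -> R) (S0 c rr : R) :
  (forall k, (1 <= k <= J)%nat -> dyadic_weight n eps k * Gf (2 * (eps * 2 ^ k)) <= S0 * rr ^ k) ->
  (forall k, (J < k)%nat -> dyadic_weight n eps k * Gf (2 * (eps * 2 ^ k)) <= c) ->
  0 <= S0 -> 0 <= c -> 0 <= rr ->
  sum_f_R0 (fun k => dyadic_weight n eps k * Gf (2 * (eps * 2 ^ k))) (J + t0)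
   <= INR n * INR n * Gf (2 * eps) + S0 * sum_f_R0 (fun k => rr ^ k) (J + t0) + c * INR t0.
Proof.
intros h1 h2 hS0 hc hr.
assert (gen : forall m, sum_f_R0 (fun k => dyadic_weight n eps k * Gf (2 * (eps * 2 ^ k))) m
   <= INR n * INR n * Gf (2 * eps) + S0 * sum_f_R0 (fun k => rr ^ k) m + c * INR (m - J)).
{ induction m.
  - simpl. replace (2 * (eps * 1)) with (2 * eps) by ring. rewrite Rmult_1_r.
    replace (0 - J)%nat with 0%nat by lia. simpl. lra.
  - rewrite !tech5. destruct (le_lt_dec (S m) J) as [hl|hl].
    + replace (S m - J)%nat with 0%nat by lia. replace (m - J)%nat with 0%nat in IHm by lia.
      specialize (h1 (S m) ltac:(lia)). change (INR 0) with 0 in *.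
      rewrite Rmult_plus_distr_l. lra.
    + replace (S m - J)%nat with (S (m - J)) by lia. rewrite S_INR.
      specialize (h2 (S m) hl).
      assert (0 <= S0 * rr ^ S m) by (apply Rmult_le_pos; [lra|apply pow_le; lra]).
      rewrite Rmult_plus_distr_l. lra. }
specialize (gen (J + t0)%nat). replace (J + t0 - J)%nat with t0 in gen by lia. exact gen.
Qed.

Lemma geom_le rr m : 0 <= rr < 1 -> sum_f_R0 (fun k => rr ^ k) m <= 1 / (1 - rr).
Proof.
intro h. rewrite tech3 by lra.
assert (0 <= rr ^ S m) by (apply pow_le; lra).
unfold Rdiv. apply Rmult_le_compat_r; [left; apply Rinv_0_lt_compat; lra|lra].
Qed.

Lemma Rpower_pos x y : 0 < Rpower x y.
Proof. unfold Rpower; apply exp_pos. Qed.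

Lemma Rpower_pow_base x c k : 0 < x -> Rpower (x ^ k) c = (Rpower x c) ^ k.
Proof.
intro hx. rewrite <- (Rpower_pow k x hx), <- (Rpower_pow k (Rpower x c) (Rpower_pos x c)).
rewrite !Rpower_mult. f_equal; ring.
Qed.

Lemma Rpower_inv x c : 0 < x -> Rpower (/ x) c = Rpower x (- c).
Proof. intro hx. unfold Rpower. rewrite ln_Rinv by exact hx. f_equal; ring. Qed.

Lemma Rpower_le_neg a b c : c <= 0 -> 0 < a <= b -> Rpower b c <= Rpower a c.
Proof.
intros hc hab. replace c with (- (- c)) by ring. rewrite (Rpower_Ropp b (-c)), (Rpower_Ropp a (-c)).
apply Rinv_le_contravar; [apply Rpower_pos|]. apply Rle_Rpower_l; [lra|exact hab].
Qed.

Lemma Rpower_sq_div s g : 0 < s -> Rpower s (2 - g) / (s * s) = Rpower s (- g).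
Proof.
intro hs. replace (2 - g) with (INR 2 + - g) by (simpl; ring).
rewrite Rpower_plus, Rpower_pow by exact hs. simpl. field. lra.
Qed.

Lemma Rpower2_gt1 c : 0 < c -> 1 < Rpower 2 c.
Proof.
intro hc. unfold Rpower. rewrite <- exp_0. apply exp_increasing.
assert (0 < ln 2) by (rewrite <- ln_1; apply ln_increasing; lra). nra.
Qed.

Lemma Rpower2_lt1 c : c < 0 -> Rpower 2 c < 1.
Proof.
intro hc. unfold Rpower. rewrite <- exp_0. apply exp_increasing.
assert (0 < ln 2) by (rewrite <- ln_1; apply ln_increasing; lra). nra.
Qed.

Lemma bernoulli_pow x j : 0 <= x -> 1 + INR j * x <= (1 + x) ^ j.
Proof.
intro hx. induction j; [simpl; lra|]. rewrite S_INR. simpl.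
assert (h := pos_INR j). nra.
Qed.

Lemma bracket_dyadic y0 X : 0 < y0 -> y0 <= X ->
  exists j, 2 ^ j * y0 <= X /\ X < 2 ^ S j * y0.
Proof.
intros hy hX.
destruct (last_index_satisfying (fun j => 2 ^ j * y0 <= X)) as [j [h1 h2]].
- simpl; lra.
- intro hall. destruct (pow2_unbounded (X / y0)) as [k hk]. specialize (hall k).
  apply (Rmult_lt_compat_r y0) in hk; [|lra]. unfold Rdiv in hk.
  rewrite Rmult_assoc, Rinv_l in hk by lra. lra.
- exists j. split; [exact h1|]. lra.
Qed.

Lemma dyadic_exists d0 c : 0 < c <= d0 -> exists J, c <= d0 / 2 ^ J <= 2 * c.
Proof.
intros hc.
destruct (last_index_satisfying (fun j => c <= d0 / 2 ^ j)) as [J [h1 h2]].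
- simpl. unfold Rdiv. rewrite Rinv_1, Rmult_1_r. lra.
- intro hall. destruct (pow2_unbounded (d0 / c)) as [k hk]. specialize (hall k).
  assert (hp := pow2_pos k).
  apply (Rmult_le_compat_r (2 ^ k)) in hall; [|lra].
  unfold Rdiv in hall. rewrite Rmult_assoc, Rinv_l in hall by lra.
  apply (Rmult_lt_compat_r c) in hk; [|lra].
  unfold Rdiv in hk. rewrite Rmult_assoc, Rinv_l in hk by lra. nra.
- exists J. split; [exact h1|].
  assert (hp := pow2_pos J).
  replace (d0 / 2 ^ S J) with (d0 / 2 ^ J / 2) in h2 by (simpl; field; lra). lra.
Qed.

Lemma ceil_nat y : 0 <= y -> exists n : nat, y < INR n <= y + 1.
Proof.
intro hy. destruct (last_index_satisfying (fun j => INR j <= y)) as [J [h1 h2]].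
- simpl; lra.
- intro hall. destruct (INR_unbounded y) as [k hk]. specialize (hall k). lra.
- exists (S J). rewrite S_INR in *. lra.
Qed.

Lemma potter_iter (L : R -> R) M rho : 0 <= rho ->
  (forall y, M <= y -> L (y / 2) <= rho * L y) ->
  forall K Y, (forall j, (j < K)%nat -> M <= Y / 2 ^ j) -> L (Y / 2 ^ K) <= rho ^ K * L Y.
Proof.
intros hr hL K. induction K; intros Y hY.
- simpl. replace (Y / 1) with Y by field. lra.
- replace (Y / 2 ^ S K) with ((Y / 2 ^ K) / 2) by (simpl; field; apply pow_nonzero; lra).
  eapply Rle_trans; [apply hL, hY; lia|].
  simpl. rewrite Rmult_assoc. apply Rmult_le_compat_l; [exact hr|].
  apply IHK. intros j hj; apply hY; lia.
Qed.

Lemma sv_doubling_lower (L : R -> R) a q :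
  (forall x, a <= x -> 0 < L x) -> slowly_varying L -> 0 < q < 1 ->
  exists M, 0 < M /\ forall y0 j, M <= y0 -> q ^ j * L y0 <= L (2 ^ j * y0).
Proof.
intros hpos hsv hq.
destruct (sv_bounds L a 2 q 2 hpos hsv ltac:(lra) ltac:(lra)) as [M1 hM1].
exists (Rmax M1 1). split; [assert (h := Rmax_r M1 1); lra|].
intros y0 j hy0. assert (m1 := Rmax_l M1 1). assert (m2 := Rmax_r M1 1).
induction j; [simpl; rewrite !Rmult_1_l; lra|].
assert (hyj : y0 <= 2 ^ j * y0) by (assert (h := pow2_ge j); assert (h' := pos_INR j); nra).
destruct (hM1 (2 ^ j * y0) ltac:(lra)) as [h _].
replace (2 ^ S j * y0) with (2 * (2 ^ j * y0)) by (simpl; ring).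
simpl. assert (h' := Rmult_le_compat_l q _ _ ltac:(lra) IHj). lra.
Qed.

Lemma sv_compare (L : R -> R) a z0 c :
  (forall x, a <= x -> 0 < L x) -> slowly_varying L -> uniform_ratio_bound L z0 -> 0 < c ->
  exists M, 0 < M /\ forall y x, M <= y -> c * y <= x <= 2 * c * y -> L y <= 8 * L x.
Proof.
intros hpos hsv hucb hc.
destruct (sv_bounds L a c (1/2) 2 hpos hsv hc ltac:(lra)) as [M3 hM3].
set (M := Rmax M3 (Rmax (z0 / c) 1)).
assert (hM : M3 <= M /\ z0 / c <= M /\ 1 <= M).
{ unfold M. assert (h1 := Rmax_l M3 (Rmax (z0 / c) 1)). assert (h2 := Rmax_r M3 (Rmax (z0 / c) 1)).
  assert (h3 := Rmax_l (z0 / c) 1). assert (h4 := Rmax_r (z0 / c) 1). lra. }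
exists M. split; [lra|]. intros y x hy [hx1 hx2].
assert (hcy : 0 < c * y) by nra.
assert (hz : z0 <= c * y).
{ assert (h : z0 / c <= y) by lra. apply (Rmult_le_compat_l c) in h; [|lra].
  replace (c * (z0 / c)) with z0 in h by (field; lra). exact h. }
assert (h1 : L y <= 2 * L (c * y)) by (destruct (hM3 y ltac:(lra)); lra).
assert (h2 : L (c * y) <= 4 * L x).
{ replace x with ((x / (c * y)) * (c * y)) by (field; lra).
  apply hucb; [exact hz|split].
  - apply (Rmult_le_reg_r (c * y)); [lra|]. replace (x / (c * y) * (c * y)) with x by (field; lra). lra.
  - apply (Rmult_le_reg_r (c * y)); [lra|]. replace (x / (c * y) * (c * y)) with x by (field; lra). lra. }
lra.
Qed.

(* A regularly varying sequence [n^g L(n)] with [g > 0] tends to infinity: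
   along dyadic blocks it grows at least like [2^(g j/2)]. *)
Lemma regular_growth_unbounded (L : R -> R) a g z0 :
  0 < g -> 0 < a -> (forall x, a <= x -> 0 < L x) -> slowly_varying L ->
  uniform_ratio_bound L z0 ->
  forall X, exists n3 : nat, forall n, (n3 <= n)%nat -> X <= Rpower (INR n) g * L (INR n).
Proof.
intros hg ha hpos hsv hucb X.
set (q := Rpower 2 (- g / 2)). set (rho := Rpower 2 (g / 2)).
assert (hq : 0 < q < 1) by (split; [apply Rpower_pos|apply Rpower2_lt1; lra]).
assert (hr1 : 1 < rho) by (apply Rpower2_gt1; lra).
assert (eqr : Rpower 2 g * q = rho) by (unfold q, rho; rewrite <- Rpower_plus; f_equal; field).
destruct (sv_doubling_lower L a q hpos hsv hq) as [M [hM hlow]].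
destruct (sv_compare L a z0 1 hpos hsv hucb ltac:(lra)) as [Mc [hMc hcmp]].
set (y0 := Rmax (Rmax M Mc) a).
assert (hy0 : M <= y0 /\ Mc <= y0 /\ a <= y0).
{ unfold y0. assert (h1 := Rmax_l (Rmax M Mc) a). assert (h2 := Rmax_r (Rmax M Mc) a).
  assert (h3 := Rmax_l M Mc). assert (h4 := Rmax_r M Mc). lra. }
set (c0 := Rpower y0 g * L y0 / 8).
assert (hc0 : 0 < c0) by (unfold c0; assert (h := Rpower_pos y0 g); assert (h' := hpos y0 ltac:(lra)); nra).
destruct (INR_unbounded ((X / c0 - 1) / (rho - 1))) as [J1 hJ1].
destruct (INR_unbounded (2 ^ J1 * y0)) as [n3 hn3].
exists n3. intros n hn. apply le_INR in hn.
assert (hp0 := pow2_pos J1).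
assert (hny : y0 <= INR n) by (assert (h := pow2_ge J1); assert (h' := pos_INR J1); nra).
destruct (bracket_dyadic y0 (INR n) ltac:(lra) hny) as [j [hj1 hj2]].
assert (hJj : INR J1 <= INR j).
{ apply le_INR. destruct (Nat.le_gt_cases J1 j) as [h|h]; [exact h|].
  assert (h' := pow2_mono (S j) J1 h). nra. }
replace (2 ^ S j * y0) with (2 * (2 ^ j * y0)) in hj2 by (simpl; ring).
set (z := 2 ^ j * y0) in *.
assert (hz : y0 <= z) by (unfold z; assert (h := pow2_ge j); assert (h' := pos_INR j); nra).
assert (hLn : L z <= 8 * L (INR n)) by (apply hcmp; lra).
assert (hpow : Rpower z g <= Rpower (INR n) g) by (apply Rle_Rpower_l; lra).
(* [rho^j c0 = (2^j y0)^g q^j L(y0) / 8 <= z^g L(z) / 8 <= n^g L(n)] *)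
assert (hT : rho ^ j * c0 <= Rpower (INR n) g * L (INR n)).
{ assert (e : rho ^ j * c0 = Rpower z g * (q ^ j * L y0) / 8).
  { unfold z, c0. rewrite <- Rpower_mult_distr by (try apply pow2_pos; lra).
    rewrite Rpower_pow_base, <- eqr, Rpow_mult_distr by lra. field. }
  rewrite e.
  assert (hLz := hlow y0 j ltac:(lra)). fold z in hLz.
  assert (0 <= q ^ j * L y0) by (apply Rmult_le_pos; [apply pow_le; lra|left; apply hpos; lra]).
  assert (Rpower z g * (q ^ j * L y0) <= Rpower z g * L z)
    by (apply Rmult_le_compat_l; [left; apply Rpower_pos|exact hLz]).
  assert (Rpower z g * L z <= Rpower (INR n) g * (8 * L (INR n)))
    by (apply Rmult_le_compat; [left; apply Rpower_pos|left; apply hpos; lra|exact hpow|exact hLn]).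
  lra. }
(* [X <= c0 (1 + J1 (rho - 1)) <= c0 rho^j] by Bernoulli's inequality. *)
assert (hb := bernoulli_pow (rho - 1) j ltac:(lra)). replace (1 + (rho - 1)) with rho in hb by ring.
assert (hX : X / c0 <= 1 + INR J1 * (rho - 1)).
{ apply (Rmult_lt_compat_r (rho - 1)) in hJ1; [|lra]. unfold Rdiv at 1 in hJ1.
  rewrite Rmult_assoc, Rinv_l in hJ1 by lra. lra. }
apply (Rmult_le_compat_r c0) in hX; [|lra]. unfold Rdiv in hX.
rewrite Rmult_assoc, Rinv_l in hX by lra.
assert (INR J1 * (rho - 1) <= INR j * (rho - 1)) by (apply Rmult_le_compat_r; lra).
nra.
Qed.

Lemma rv_scale_down (L : R -> R) a g z0 K :
  0 < g -> (forall x, a <= x -> 0 < L x) -> slowly_varying L ->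
  uniform_ratio_bound L z0 -> 0 < K ->
  exists R0 M, 1 <= R0 /\ forall Y x, M <= Y -> R0 * Y <= x <= 2 * R0 * Y ->
    K * Rpower Y g * L Y <= Rpower x g * L x.
Proof.
intros hg hpos hsv hucb hK.
set (A0 := Rmax 1 (8 * K)).
assert (hA0 : 1 <= A0 /\ 8 * K <= A0) by (split; [apply Rmax_l|apply Rmax_r]).
set (R0 := Rpower A0 (/ g)).
assert (hR0g : Rpower R0 g = A0).
{ unfold R0. rewrite Rpower_mult. replace (/ g * g) with 1 by (field; lra). apply Rpower_1. lra. }
assert (hR1 : 1 <= R0).
{ unfold R0. rewrite <- (Rpower_O A0) by lra. apply Rle_Rpower; [lra|].
  left; apply Rinv_0_lt_compat; lra. }
destruct (sv_compare L a z0 R0 hpos hsv hucb ltac:(lra)) as [M3 [hM3 hcmp]].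
exists R0, (Rmax M3 a). split; [exact hR1|]. intros Y x hY hx.
assert (m1 := Rmax_l M3 a). assert (m2 := Rmax_r M3 a).
assert (hLY : L Y <= 8 * L x) by (apply hcmp; lra).
assert (hLx : 0 < L x) by (apply hpos; nra).
assert (hYg : Rpower Y g <= Rpower x g / A0).
{ eapply Rle_trans; [apply Rle_Rpower_l; [lra|split; [lra|]]|].
  - apply (Rmult_le_reg_l R0); [lra|]. replace (R0 * (x / R0)) with x by (field; lra).
    exact (proj1 hx).
  - rewrite <- hR0g. unfold Rdiv. rewrite <- Rpower_mult_distr by (try apply Rinv_0_lt_compat; nra).
    rewrite Rpower_inv by lra. rewrite Rpower_Ropp. lra. }
assert (hxg := Rpower_pos x g).
assert (K * Rpower Y g * L Y <= K * (Rpower x g / A0) * (8 * L x)).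
{ apply Rmult_le_compat; [|left; apply hpos; lra| |exact hLY].
  - apply Rmult_le_pos; [lra|left; apply Rpower_pos].
  - apply Rmult_le_compat_l; [lra|exact hYg]. }
assert (e : K * (Rpower x g / A0) * (8 * L x) = (8 * K / A0) * (Rpower x g * L x)) by (field; lra).
assert (8 * K / A0 <= 1).
{ apply (Rmult_le_reg_r A0); [lra|]. replace (8 * K / A0 * A0) with (8 * K) by (field; lra). lra. }
assert (0 < Rpower x g * L x) by nra.
nra.
Qed.

Lemma small_scale_term (Gf L : R -> R) n g C1 theta k rho :
  0 < theta -> 0 <= C1 -> 0 <= rho -> 0 <= L (/ theta) -> (1 <= k)%nat ->
  0 <= L (/ (theta * 2 ^ k)) ->
  L (/ (theta * 2 ^ k)) <= rho ^ k * L (/ theta) ->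
  Gf (theta * 2 ^ k) <= C1 * Rpower (theta * 2 ^ k) (2 - g) * L (/ (theta * 2 ^ k)) ->
  dyadic_weight n (theta / 2) k * Gf (2 * (theta / 2 * 2 ^ k)) <=
    576 * C1 * Rpower (/ theta) g * L (/ theta) * (Rpower 2 (- g) * rho) ^ k.
Proof.
intros ht hC hr hL0 hk hLs0 hLs hG.
destruct k as [|k]; [lia|].
set (s := theta * 2 ^ S k).
assert (hs : 0 < s) by (unfold s; assert (h := pow2_pos (S k)); nra).
replace (2 * (theta / 2 * 2 ^ S k)) with s by (unfold s; field).
unfold dyadic_weight.
replace (theta / 2 * 2 ^ S k * (theta / 2 * 2 ^ S k)) with (s * s / 4) by (unfold s; field).
fold s in hG, hLs, hLs0.
replace (144 / (s * s / 4) * Gf s) with (576 * (Gf s / (s * s))) by (field; lra).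
assert (e : Rpower s (- g) = Rpower (/ theta) g * (Rpower 2 (- g)) ^ S k).
{ unfold s. rewrite <- Rpower_mult_distr by (try apply pow2_pos; lra).
  rewrite Rpower_pow_base by lra. rewrite Rpower_inv by lra. reflexivity. }
assert (h1 : Gf s / (s * s) <= C1 * Rpower s (- g) * L (/ s)).
{ rewrite <- Rpower_sq_div by exact hs. unfold Rdiv.
  apply (Rmult_le_compat_r (/ (s * s))) in hG; [|left; apply Rinv_0_lt_compat; nra].
  eapply Rle_trans; [exact hG|]. right; field; lra. }
rewrite e in h1. rewrite Rpow_mult_distr.
assert (hp1 := Rpower_pos (/ theta) g).
assert (hp2 : 0 <= Rpower 2 (- g) ^ S k) by (apply pow_le; left; apply Rpower_pos).
assert (h2 : C1 * (Rpower (/ theta) g * Rpower 2 (- g) ^ S k) * L (/ s) <=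
             C1 * (Rpower (/ theta) g * Rpower 2 (- g) ^ S k) * (rho ^ S k * L (/ theta))).
{ apply Rmult_le_compat_l; [|exact hLs]. apply Rmult_le_pos; [exact hC|]. apply Rmult_le_pos; lra. }
assert (e2 : 576 * C1 * Rpower (/ theta) g * L (/ theta) * (Rpower 2 (- g) ^ S k * rho ^ S k) =
   576 * (C1 * (Rpower (/ theta) g * Rpower 2 (- g) ^ S k) * (rho ^ S k * L (/ theta)))) by ring.
rewrite e2. lra.
Qed.

Lemma large_scale_term (Gf : R -> R) n theta k F0 d0 :
  0 < theta -> 0 < d0 -> (1 <= k)%nat -> d0 <= theta * 2 ^ k ->
  0 <= Gf (theta * 2 ^ k) <= F0 ->
  dyadic_weight n (theta / 2) k * Gf (2 * (theta / 2 * 2 ^ k)) <= 576 * F0 / (d0 * d0).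
Proof.
intros ht hd hk hs hG.
destruct k as [|k]; [lia|].
set (s := theta * 2 ^ S k) in *.
replace (2 * (theta / 2 * 2 ^ S k)) with s by (unfold s; field).
unfold dyadic_weight.
replace (theta / 2 * 2 ^ S k * (theta / 2 * 2 ^ S k)) with (s * s / 4) by (unfold s; field).
assert (hs0 : 0 < s) by lra.
replace (144 / (s * s / 4) * Gf s) with (576 * Gf s / (s * s)) by (field; lra).
apply (Rmult_le_reg_r (s * s * (d0 * d0))); [apply Rmult_lt_0_compat; nra|].
replace (576 * Gf s / (s * s) * (s * s * (d0 * d0))) with (576 * Gf s * (d0 * d0)) by (field; lra).
replace (576 * F0 / (d0 * d0) * (s * s * (d0 * d0))) with (576 * F0 * (s * s)) by (field; lra).
assert (d0 * d0 <= s * s) by nra.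
assert (0 <= Gf s * (d0 * d0)) by (apply Rmult_le_pos; nra).
nra.
Qed.

Section VarianceUpperBound.
Variables (g : R) (L : R -> R) (a : R) (D : R -> R) (r : Z -> R) (C1 d1 : R).
Hypothesis hg : 0 < g.
Hypothesis hpos : forall x, a <= x -> 0 < L x.
Hypothesis hsv : slowly_varying L.
Hypothesis hD : spectral_df D.
Hypothesis hS : symmetric_df D.
Hypothesis hsp : is_spectral_measure_of D r.
Hypothesis hC1 : 0 < C1.
Hypothesis hG1 : forall x, 0 < x < d1 -> G D x <= C1 * Rpower x (2 - g) * L (/ x).

Lemma potter_threshold : exists Mp, 1 <= Mp /\ a <= Mp /\
  forall y, Mp <= y -> L (y / 2) <= Rpower 2 (g / 2) * L y.
Proof.
assert (hr1 := Rpower2_gt1 (g / 2) ltac:(lra)).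
destruct (sv_bounds L a (1/2) 0 (Rpower 2 (g / 2)) hpos hsv ltac:(lra) ltac:(lra)) as [M0 hM0].
assert (m1 := Rmax_l (Rmax M0 a) 1). assert (m2 := Rmax_r (Rmax M0 a) 1).
assert (m3 := Rmax_l M0 a). assert (m4 := Rmax_r M0 a).
exists (Rmax (Rmax M0 a) 1). split; [lra|split; [lra|]].
intros y hy. replace (y / 2) with (1 / 2 * y) by field. apply (hM0 y). lra.
Qed.

Lemma dyadic_variance_bound Mp d0 t0 J theta n :
  1 <= Mp -> a <= Mp -> (forall y, Mp <= y -> L (y / 2) <= Rpower 2 (g / 2) * L y) ->
  0 < d0 -> d0 <= d1 / 2 -> d0 <= / Mp -> 2 * PI / d0 < 2 ^ t0 -> theta * 2 ^ J = d0 ->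
  varS r n <= INR n * INR n * G D theta
    + 576 * C1 * Rpower (/ theta) g * L (/ theta) / (1 - Rpower 2 (- g) * Rpower 2 (g / 2))
    + 576 * D PI / (d0 * d0) * INR t0.
Proof.
intros hMp1 hMpa hdown hd0 hd0a hd0b ht0 hth.
set (rho := Rpower 2 (g / 2)) in *.
set (rr := Rpower 2 (- g) * rho).
assert (hrr : 0 <= rr < 1).
{ unfold rr, rho. rewrite <- Rpower_plus. split; [left; apply Rpower_pos|].
  apply Rpower2_lt1. lra. }
assert (hpJ := pow2_pos J).
assert (htheta : 0 < theta) by nra.
assert (hd0Mp : Mp <= / d0).
{ rewrite <- (Rinv_inv Mp). apply Rinv_le_contravar; [exact hd0|exact hd0b]. }
assert (hscale : forall k, (k <= J)%nat -> 0 < theta * 2 ^ k <= d0).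
{ intros k hk. assert (hpk := pow2_pos k). assert (h := pow2_mono k J hk). nra. }
assert (hLY : 0 < L (/ theta)).
{ apply hpos. destruct (hscale 0%nat ltac:(lia)) as [_ h0]. rewrite pow_O, Rmult_1_r in h0.
  assert (/ d0 <= / theta) by (apply Rinv_le_contravar; lra). lra. }
eapply Rle_trans.
{ apply (varS_cover_bound D r n (J + t0) (fun k => theta / 2 * 2 ^ k)
           (dyadic_weight n (theta / 2)) (theta / 2) hD hS hsp).
  - lra.
  - intro k. apply dyadic_weight_nonneg. lra.
  - intro k. assert (h := pow2_ge k). assert (h' := pos_INR k). nra.
  - intros y hy. apply fejer_dyadic_cover; [lra| |exact hy].
    rewrite pow_add. replace (theta / 2 * (2 ^ J * 2 ^ t0)) with (d0 * 2 ^ t0 / 2) by (rewrite <- hth; field).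
    apply (Rmult_lt_compat_r d0) in ht0; [|lra]. unfold Rdiv in ht0.
    rewrite Rmult_assoc, Rinv_l in ht0 by lra. lra. }
eapply Rle_trans.
{ apply (dyadic_sum_split n (theta / 2) J t0 (G D) (576 * C1 * Rpower (/ theta) g * L (/ theta))
           (576 * D PI / (d0 * d0)) rr).
  - intros k [hk1 hk2]. destruct (hscale k hk2) as [hsk0 hsk]. assert (hpk := pow2_pos k).
    apply (small_scale_term (G D) L n g C1 theta k rho htheta ltac:(lra) ltac:(unfold rho; left; apply Rpower_pos)).
    + lra.
    + exact hk1.
    + left; apply hpos. assert (/ d0 <= / (theta * 2 ^ k)) by (apply Rinv_le_contravar; lra). lra.
    + replace (/ (theta * 2 ^ k)) with (/ theta / 2 ^ k) by (field; lra).
      apply (potter_iter L Mp rho ltac:(unfold rho; left; apply Rpower_pos) hdown k (/ theta)).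
      intros j hj. destruct (hscale j ltac:(lia)) as [hsj0 hsj].
      replace (/ theta / 2 ^ j) with (/ (theta * 2 ^ j)) by (assert (h := pow2_pos j); field; lra).
      assert (/ d0 <= / (theta * 2 ^ j)) by (apply Rinv_le_contravar; lra). lra.
    + apply hG1. lra.
  - intros k hk. assert (hpk := pow2_pos k).
    apply (large_scale_term (G D) n theta k (D PI) d0 htheta hd0 ltac:(lia)).
    + assert (h := pow2_mono (S J) k hk). simpl in h. nra.
    + split; [apply (G_nonneg D hD hS); nra|apply (G_le_PI D hD hS)].
  - apply Rmult_le_pos; [|lra]. apply Rmult_le_pos; [lra|left; apply Rpower_pos].
  - apply Rmult_le_pos; [apply Rmult_le_pos; [lra|apply (D_nonneg D hD)]|].
    left; apply Rinv_0_lt_compat; nra.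
  - lra. }
replace (2 * (theta / 2)) with theta by field.
assert (hgeo := geom_le rr (J + t0) hrr).
assert (hsmall : 576 * C1 * Rpower (/ theta) g * L (/ theta) * sum_f_R0 (fun k => rr ^ k) (J + t0)
        <= 576 * C1 * Rpower (/ theta) g * L (/ theta) * (1 / (1 - rr))).
{ apply Rmult_le_compat_l; [|exact hgeo].
  apply Rmult_le_pos; [|lra]. apply Rmult_le_pos; [lra|left; apply Rpower_pos]. }
fold rr. unfold Rdiv at 2. unfold Rdiv in hsmall. rewrite Rmult_1_l in hsmall. lra.
Qed.

Variables (z0 C2 : R) (N2 : nat).
Hypothesis ha : 0 < a.
Hypothesis hucb : uniform_ratio_bound L z0.
Hypothesis hd1 : 0 < d1.
Hypothesis hC2 : 0 < C2.
Hypothesis hN2 : forall n : nat, (N2 <= n)%nat ->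
  varS r n >= C2 * (Rpower (INR n) g * L (INR n)).

(* Choosing [theta = d0/2^J] in
   [[R0/n, 2R0/n]] with [R0] large, the small-scale part of the dyadic bound
   is at most [C2/4 n^g L(n)] by [rv_scale_down], and the large-scale part
   is a constant, hence eventually at most [C2/4 n^g L(n)]. *)
Lemma variance_concentrates_at_scale : exists R0 nA, 1 <= R0 /\
  forall n : nat, (nA <= n)%nat -> exists theta, 0 < theta <= 2 * R0 / INR n /\
    C2 / 2 * (Rpower (INR n) g * L (INR n)) <= INR n * INR n * G D theta.
Proof.
destruct potter_threshold as [Mp [hMp1 [hMpa hdown]]].
set (d0 := Rmin (d1 / 2) (/ Mp)).
assert (hd0 : 0 < d0 /\ d0 <= d1 / 2 /\ d0 <= / Mp).
{ unfold d0. split; [apply Rmin_glb_lt; [lra|apply Rinv_0_lt_compat; lra]|].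
  split; [apply Rmin_l|apply Rmin_r]. }
destruct hd0 as [hd0 [hd0a hd0b]].
destruct (pow2_unbounded (2 * PI / d0)) as [t0 ht0].
set (rr := Rpower 2 (- g) * Rpower 2 (g / 2)).
assert (hrr : rr < 1) by (unfold rr; rewrite <- Rpower_plus; apply Rpower2_lt1; lra).
set (small := 576 * C1 / (1 - rr)).
assert (hsmall : 0 < small) by (unfold small; apply Rdiv_lt_0_compat; lra).
set (large := 576 * D PI / (d0 * d0) * INR t0).
assert (hlarge : 0 <= large).
{ unfold large. apply Rmult_le_pos; [|apply pos_INR]. apply Rmult_le_pos;
  [apply Rmult_le_pos; [lra|apply (D_nonneg D hD)]|left; apply Rinv_0_lt_compat; nra]. }
destruct (rv_scale_down L a g z0 (4 * small / C2) ltac:(lra) hpos hsv hucb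
            ltac:(apply Rdiv_lt_0_compat; lra)) as [R0 [M [hR1 hscale]]].
destruct (regular_growth_unbounded L a g z0 ltac:(lra) ha hpos hsv hucb (4 * large / C2))
  as [n3 hn3].
destruct (INR_unbounded (Rmax (R0 / d0) (2 * R0 * M))) as [nR hnR].
exists R0, (max N2 (max n3 nR)). split; [exact hR1|]. intros n hn.
assert (hnX : R0 / d0 < INR n /\ 2 * R0 * M < INR n).
{ assert (h := le_INR nR n ltac:(lia)). assert (m1 := Rmax_l (R0 / d0) (2 * R0 * M)).
  assert (m2 := Rmax_r (R0 / d0) (2 * R0 * M)). lra. }
destruct hnX as [hnX1 hnX2].
assert (hn0 : 0 < INR n).
{ assert (0 < R0 / d0) by (apply Rdiv_lt_0_compat; lra). lra. }
destruct (dyadic_exists d0 (R0 / INR n)) as [J [hJ1 hJ2]].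
{ split; [apply Rdiv_lt_0_compat; lra|].
  apply (Rmult_le_reg_r (INR n)); [lra|]. replace (R0 / INR n * INR n) with R0 by (field; lra).
  apply (Rmult_lt_compat_r d0) in hnX1; [|lra].
  replace (R0 / d0 * d0) with R0 in hnX1 by (field; lra). lra. }
set (theta := d0 / 2 ^ J) in *.
assert (hpJ := pow2_pos J).
assert (hth : 0 < theta) by (unfold theta; apply Rdiv_lt_0_compat; lra).
exists theta. split; [split; [exact hth|lra]|].
set (Y := / theta).
assert (hY : R0 * Y <= INR n <= 2 * R0 * Y).
{ unfold Y. split.
  - apply (Rmult_le_reg_r theta); [exact hth|].
    replace (R0 * / theta * theta) with R0 by (field; lra).
    apply (Rmult_le_compat_l (INR n)) in hJ1; [|lra].
    replace (INR n * (R0 / INR n)) with R0 in hJ1 by (field; lra). lra.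
  - apply (Rmult_le_reg_r theta); [exact hth|].
    replace (2 * R0 * / theta * theta) with (2 * R0) by (field; lra).
    apply (Rmult_le_compat_l (INR n)) in hJ2; [|lra].
    replace (INR n * (2 * (R0 / INR n))) with (2 * R0) in hJ2 by (field; lra). lra. }
assert (hYM : M <= Y) by nra.
assert (hV := dyadic_variance_bound Mp d0 t0 J theta n hMp1 hMpa hdown hd0 hd0a hd0b ht0
                ltac:(unfold theta; field; lra)).
fold rr large Y in hV.
assert (hV' : varS r n <= INR n * INR n * G D theta + small * Rpower Y g * L Y + large).
{ replace (small * Rpower Y g * L Y) with (576 * C1 * Rpower Y g * L Y / (1 - rr))
    by (unfold small; field; lra). exact hV. }
assert (hsm := hscale Y (INR n) hYM hY).
assert (hlg := hn3 n ltac:(lia)).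
assert (hlow := hN2 n ltac:(lia)).
set (T := Rpower (INR n) g * L (INR n)) in *.
assert (small * Rpower Y g * L Y <= C2 / 4 * T).
{ apply (Rmult_le_compat_l (C2 / 4)) in hsm; [|lra].
  replace (C2 / 4 * (4 * small / C2 * Rpower Y g * L Y)) with (small * Rpower Y g * L Y)
    in hsm by (field; lra). exact hsm. }
assert (large <= C2 / 4 * T).
{ apply (Rmult_le_compat_l (C2 / 4)) in hlg; [|lra].
  replace (C2 / 4 * (4 * large / C2)) with large in hlg by (field; lra). exact hlg. }
lra.
Qed.

End VarianceUpperBound.

Lemma G_lower_from_scale (D : R -> R) (L : R -> R) g c R0 (n : nat) x :
  spectral_df D -> symmetric_df D -> 0 < INR n ->
  (exists theta, 0 < theta <= 2 * R0 / INR n /\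
     c * (Rpower (INR n) g * L (INR n)) <= INR n * INR n * G D theta) ->
  2 * R0 / INR n <= x ->
  c * (Rpower (INR n) (g - 2) * L (INR n)) <= G D x.
Proof.
intros hD hS hn [theta [[hth0 hth1] hth2]] hx.
assert (hGx : G D theta <= G D x) by (apply (G_mono D hD hS); lra).
assert (e : Rpower (INR n) (g - 2) = Rpower (INR n) g / (INR n * INR n)).
{ replace (g - 2) with (- (2 - g)) by ring.
  rewrite <- (Rpower_sq_div (INR n) (2 - g) hn). replace (2 - (2 - g)) with g by ring.
  reflexivity. }
rewrite e. apply (Rmult_le_reg_r (INR n * INR n)); [nra|].
replace (c * (Rpower (INR n) g / (INR n * INR n) * L (INR n)) * (INR n * INR n))
  with (c * (Rpower (INR n) g * L (INR n))) by (field; lra).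
nra.
Qed.

(* With [y = 1/x] and [n = ceil(2 R0 y)], the previous lemma
   gives [G(x) >= C2/2 n^(g-2) L(n)]; since [2 R0 y <= n <= 3 R0 y],
   [n^(g-2) >= (3 R0)^(g-2) x^(2-g)] and [L(n) >= L(y) / 8]. *)
Theorem lemma3
  (gamma : R) (L : R -> R) (a : R) (D : R -> R) (r : Z -> R) :
  0 < gamma < 2 ->
  0 < a ->
  (forall x, a <= x -> 0 < L x) ->
  measurable_on_ray L a ->
  slowly_varying L ->
  spectral_df D ->
  symmetric_df D ->
  is_spectral_measure_of D r ->
  (exists C1, 0 < C1 /\ exists delta, 0 < delta /\
     forall x, 0 < x < delta ->
       G D x <= C1 * Rpower x (2 - gamma) * L (/ x)) ->
  (exists C2, 0 < C2 /\ exists N : nat,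
     forall n : nat, (N <= n)%nat ->
       varS r n >= C2 * (Rpower (INR n) gamma * L (INR n))) ->
  exists C3, 0 < C3 /\ exists delta, 0 < delta /\
    forall x, 0 < x < delta ->
      G D x > C3 * Rpower x (2 - gamma) * L (/ x).
Proof.
intros hg ha hpos hmeas hsv hD hS hsp [C1 [hC1 [d1 [hd1 hG1]]]] [C2 [hC2 [N2 hN2]]].
destruct (sv_uniform_bound L a ha hpos hmeas hsv) as [z0 hucb].
destruct (variance_concentrates_at_scale gamma L a D r C1 d1 (proj1 hg) hpos hsv hD hS hsp hC1 hG1
            z0 C2 N2 ha hucb hd1 hC2 hN2) as [R0 [nA [hR1 hkey]]].
destruct (sv_compare L a z0 (2 * R0) hpos hsv hucb ltac:(lra)) as [M3 [hM3 hcmp]].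
set (Ymax := Rmax (Rmax (INR nA / (2 * R0)) M3) (Rmax a 1)).
assert (hY : INR nA / (2 * R0) <= Ymax /\ M3 <= Ymax /\ a <= Ymax /\ 1 <= Ymax).
{ unfold Ymax.
  assert (m1 := Rmax_l (Rmax (INR nA / (2 * R0)) M3) (Rmax a 1)).
  assert (m2 := Rmax_r (Rmax (INR nA / (2 * R0)) M3) (Rmax a 1)).
  assert (m3 := Rmax_l (INR nA / (2 * R0)) M3). assert (m4 := Rmax_r (INR nA / (2 * R0)) M3).
  assert (m5 := Rmax_l a 1). assert (m6 := Rmax_r a 1). lra. }
destruct hY as [hY1 [hY2 [hY3 hY4]]].
set (P := Rpower (3 * R0) (gamma - 2)).
assert (hP : 0 < P) by apply Rpower_pos.
exists (C2 * P / 32). split; [apply Rdiv_lt_0_compat; [nra|lra]|].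
exists (/ (Ymax + 1)). split; [apply Rinv_0_lt_compat; lra|].
intros x [hx0 hx1].
set (y := / x).
assert (hy : Ymax < y).
{ unfold y. apply (Rmult_lt_reg_r x); [exact hx0|]. rewrite Rinv_l by lra.
  apply (Rmult_lt_compat_l (Ymax + 1)) in hx1; [|lra]. rewrite Rinv_r in hx1 by lra. nra. }
assert (hxy : x = / y) by (unfold y; rewrite Rinv_inv; reflexivity).
destruct (ceil_nat (2 * R0 * y) ltac:(nra)) as [n [hn1 hn2]].
assert (hn0 : 0 < INR n) by nra.
assert (hnA : (nA <= n)%nat).
{ apply INR_le. apply (Rmult_le_compat_l (2 * R0)) in hY1; [|lra].
  replace (2 * R0 * (INR nA / (2 * R0))) with (INR nA) in hY1 by (field; lra). nra. }
assert (hGn := G_lower_from_scale D L gamma (C2 / 2) R0 n x hD hS hn0 (hkey n hnA)).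
assert (hGx : C2 / 2 * (Rpower (INR n) (gamma - 2) * L (INR n)) <= G D x).
{ apply hGn. rewrite hxy. apply (Rmult_le_reg_r (INR n * y)); [nra|].
  replace (2 * R0 / INR n * (INR n * y)) with (2 * R0 * y) by (field; lra).
  replace (/ y * (INR n * y)) with (INR n) by (field; lra). lra. }
assert (hpow : P * Rpower x (2 - gamma) <= Rpower (INR n) (gamma - 2)).
{ replace (P * Rpower x (2 - gamma)) with (Rpower (3 * R0 * y) (gamma - 2)).
  - apply Rpower_le_neg; nra.
  - unfold P. rewrite <- Rpower_mult_distr by nra. f_equal.
    rewrite hxy, Rpower_inv by lra. f_equal; ring. }
assert (hLn : L y <= 8 * L (INR n)) by (apply hcmp; nra).
assert (hLy : 0 < L y) by (apply hpos; lra).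
assert (hX : 0 < Rpower x (2 - gamma)) by apply Rpower_pos.
assert (hfin : C2 / 2 * (P * Rpower x (2 - gamma) * (L y / 8)) <= G D x).
{ eapply Rle_trans; [|exact hGx]. apply Rmult_le_compat_l; [lra|].
  apply Rmult_le_compat; [nra|lra|exact hpow|lra]. }
assert (hpos3 : 0 < C2 * P / 32 * Rpower x (2 - gamma) * L y).
{ apply Rmult_lt_0_compat; [|exact hLy]. apply Rmult_lt_0_compat; [|exact hX].
  apply Rdiv_lt_0_compat; [nra|lra]. }
fold y. lra.
Qed.
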